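(* Let $\beta<1$ be real and $\alpha=1$. Then the $\beta$-Ces\`aro operator $C_\beta$ maps $\mathcal{B}_1^0$ into $\mathcal{B}_1^0$ and is a bounded linear operator from $(\mathcal{B}_1^0,\|\cdot\|_{\mathcal{B}_1})$ to itself.
   Context: $\mathbb{D}=\{z\in\mathbb{C}:|z|<1\}$. For $\alpha>0$, the $\alpha$-Bloch space $\mathcal{B}_\alpha$ is the space of analytic functions $f$ on $\mathbb{D}$ with $\|f\|_{\mathcal{B}_\alpha}:=\sup_{z\in\mathbb{D}}(1-|z|^2)^\alpha|f'(z)|<\infty$. $\mathcal{B}_\alpha^0=\{f\in\mathcal{B}_\alpha: f(0)=0\}$, normed by $\|\cdot\|_{\mathcal{B}_\alpha}$. For $\beta\in\mathbb{R}$, the $\beta$-Ces\`aro operator is $C_\beta(f)(z)=\int_0^z \frac{f(w)}{w(1-w)^\beta}\,dw$ for analytic $f$ on $\mathbb{D}$ with $f(0)=0$, where $(1-w)^{\beta}$ is defined by the principal branch. *)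

From Stdlib Require Import Reals.
From Coquelicot Require Export Coquelicot.
Open Scope R_scope.

(* Principal argument of a complex number, with values in (-PI, PI]
   (and Arg 0 = 0 by convention). *)
Definition Arg (w : C) : R :=
  let x := fst w in let y := snd w in
  if Rlt_dec 0 x then atan (y / x)
  else if Rlt_dec x 0 then
    (if Rle_dec 0 y then atan (y / x) + PI else atan (y / x) - PI)
  else if Rlt_dec 0 y then PI / 2
  else if Rlt_dec y 0 then - (PI / 2)
  else 0.

Definition Clog (w : C) : C := (ln (Cmod w), Arg w).

Definition Cexp (w : C) : C :=
  (exp (fst w) * cos (snd w), exp (fst w) * sin (snd w)).

Definition Cpow (w : C) (b : R) : C := Cexp (Cmult (RtoC b) (Clog w)).

Definition in_disc (z : C) : Prop := Cmod z < 1.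

Definition analytic_disc (f : C -> C) : Prop :=
  forall z : C, in_disc z -> @ex_derive C_AbsRing C_NormedModule f z.

Definition bloch_vals (f : C -> C) (r : R) : Prop :=
  exists (z l : C), in_disc z /\ @is_derive C_AbsRing C_NormedModule f z l /\
    r = (1 - Cmod z ^ 2) * Cmod l.

Definition bloch_norm (f : C -> C) : R := real (Lub_Rbar (bloch_vals f)).

Definition in_B1 (f : C -> C) : Prop :=
  analytic_disc f /\ exists M : R, forall r, bloch_vals f r -> r <= M.

Definition in_B10 (f : C -> C) : Prop := in_B1 f /\ f (RtoC 0) = RtoC 0.

(* beta-Cesaro operator: C_beta f (z) = int_0^z f(w) / (w (1-w)^beta) dw,
   the integral taken along the segment [0, z], w = t z, dw = z dt. *)
Definition cesaro (beta : R) (f : C -> C) (z : C) : C :=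
  @RInt C_R_CompleteNormedModule
    (fun t : R =>
       Cmult (Cdiv (f (Cmult (RtoC t) z))
                   (Cmult (Cmult (RtoC t) z)
                          (Cpow (Cminus (RtoC 1) (Cmult (RtoC t) z)) beta)))
             z) 0 1.

From Stdlib Require Import Reals Lra Psatz Lia.
From Coquelicot Require Import Coquelicot.
From Pilot Require Import Defs.
Open Scope R_scope.

(* Write [C_beta f z = int_0^1 g (t z) z dt] with [g w = f w / (w (1 - w)^beta)], extended by
   [g 0 = f'(0)], which is possible because [f 0 = 0].  Then [g] is continuous on the disc and
   holomorphic off [0].  Goursat's lemma, applied on half-planes avoiding [0] and combined with
   a shrinking argument at [0], makes the integral of [g] over every triangle with a vertex at
   [0] vanish.  Hence [C_beta f] is holomorphic with derivative [g], and [C_beta f 0 = 0].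
   For the bound, the mean value theorem along [[0, z]] and the Bloch bound on [f'] give
   [|f z| <= ||f|| log (1 / (1 - |z|))].  An elementary estimate of
   [(1 - r^2) log (1 / (1 - r)) / (r s^beta)] for [r = |z|] and [s = |1 - z|] in [[1 - r, 1 + r]]
   then gives [(1 - |z|^2) |g z| <= K_beta ||f||]. *)

(** * Complex derivatives *)

Lemma Cmod_minus_le (w z : C) : Cmod w <= Cmod z + Cmod (Cminus w z).
Proof.
  pose proof (Cmod_triangle z (Cminus w z)) as H.
  replace (Cplus z (Cminus w z)) with w in H by ring. exact H.
Qed.

Lemma Cmod_minus_sym x y : Cmod (Cminus x y) = Cmod (Cminus y x).
Proof. replace (Cminus x y) with (Copp (Cminus y x)) by ring. apply Cmod_opp. Qed.

Lemma Cmod_RtoC_mult (t : R) (z : C) : Cmod (Cmult (RtoC t) z) = Rabs t * Cmod z.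
Proof. rewrite Cmod_mult, Cmod_R. reflexivity. Qed.

Lemma Rabs_snd_le_Cmod (z : C) : Rabs (snd z) <= Cmod z.
Proof. eapply Rle_trans; [apply Rmax_r | apply Rmax_Cmod]. Qed.

Lemma Cmod_le_Rabs_sum (x y : R) : Cmod (x, y) <= Rabs x + Rabs y.
Proof.
  unfold Cmod. simpl. pose proof (Rabs_pos x). pose proof (Rabs_pos y).
  rewrite <- (sqrt_Rsqr (Rabs x + Rabs y)) by lra. apply sqrt_le_1_alt.
  pose proof (Rsqr_abs x). pose proof (Rsqr_abs y). unfold Rsqr in *. nra.
Qed.

(* Complex derivative for the normed-module structure [AbsRing_NormedModule C_AbsRing],
   for which Coquelicot's generic rules ([is_derive_mult], ...) are stated; [Defs] uses
   [C_NormedModule] instead, and [is_derive_C_Defs] relates the two. *)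
Definition is_derive_C (f : C -> C) (z l : C) : Prop :=
  @is_derive C_AbsRing (AbsRing_NormedModule C_AbsRing) f z l.

Definition Cdiff_eps (f : C -> C) (z l : C) : Prop :=
  forall eps : R, 0 < eps -> exists del : R, 0 < del /\
    forall w, Cmod (Cminus w z) < del ->
      Cmod (Cminus (Cminus (f w) (f z)) (Cmult l (Cminus w z))) <= eps * Cmod (Cminus w z).

Definition Ccont_at (g : C -> C) (z : C) : Prop :=
  forall eps : R, 0 < eps -> exists del : R, 0 < del /\
    forall w, Cmod (Cminus w z) < del -> Cmod (Cminus (g w) (g z)) < eps.

(* Both structures have the Cmod-balls as neighbourhoods, so either derivative unfolds to
   [Cdiff_eps] by the same two scripts. *)
Ltac eps_of_is_derive :=
  intros [_ H] eps Heps;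
  destruct (H _ (fun P HP => HP) (mkposreal eps Heps)) as [d Hd];
  exists d; split; [apply cond_pos|]; intros w Hw;
  rewrite Cmult_comm; exact (Hd w Hw).

Ltac is_derive_of_eps f z l :=
  intros H; split;
  [ split;
    [ intros x y; change (Cmult (Cplus x y) l = Cplus (Cmult x l) (Cmult y l)); ring
    | intros x y; change (Cmult (Cmult x y) l = Cmult x (Cmult y l)); ring
    | exists (Cmod l + 1); pose proof (Cmod_ge_0 l); split; [lra|];
      intros x; change (Cmod (Cmult x l) <= (Cmod l + 1) * Cmod x);
      rewrite Cmod_mult; pose proof (Cmod_ge_0 x); nra ]
  | intros x Hx;
    apply (@is_filter_lim_locally_unique C_AbsRing (AbsRing_NormedModule C_AbsRing)) in Hx;
    subst x; intros eps; destruct (H eps (cond_pos eps)) as [d [Hd Hw]];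
    exists (mkposreal d Hd); intros y Hy;
    change (Cmod (Cminus (Cminus (f y) (f z)) (Cmult (Cminus y z) l)) <= eps * Cmod (Cminus y z));
    rewrite (Cmult_comm _ l); exact (Hw y Hy) ].

Lemma is_derive_C_eps f z l : is_derive_C f z l <-> Cdiff_eps f z l.
Proof. split; [eps_of_is_derive | is_derive_of_eps f z l]. Qed.

Lemma is_derive_C_Defs f z l :
  is_derive_C f z l <-> @is_derive C_AbsRing C_NormedModule f z l.
Proof.
  rewrite is_derive_C_eps. split; [is_derive_of_eps f z l | eps_of_is_derive].
Qed.

Lemma is_derive_C_ext f g z l : (forall w, f w = g w) -> is_derive_C f z l -> is_derive_C g z l.
Proof. intros; eapply is_derive_ext; eauto. Qed.

Lemma is_derive_C_ext_loc f g z l :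
  (exists d, 0 < d /\ forall w, Cmod (Cminus w z) < d -> f w = g w) ->
  is_derive_C f z l -> is_derive_C g z l.
Proof.
  intros [d [Hd H]] Hf. eapply is_derive_ext_loc; eauto.
  exists (mkposreal d Hd). intros y Hy. apply H, Hy.
Qed.

Lemma is_derive_C_val f z l l' : is_derive_C f z l -> l = l' -> is_derive_C f z l'.
Proof. intros H ->; exact H. Qed.

Lemma is_derive_C_const c z : is_derive_C (fun _ => c) z (RtoC 0).
Proof. exact (@is_derive_const C_AbsRing (AbsRing_NormedModule C_AbsRing) c z). Qed.

Lemma is_derive_C_id z : is_derive_C (fun w => w) z (RtoC 1).
Proof. exact (@is_derive_id C_AbsRing z). Qed.

Lemma is_derive_C_plus f g z a b :
  is_derive_C f z a -> is_derive_C g z b ->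
  is_derive_C (fun w => Cplus (f w) (g w)) z (Cplus a b).
Proof. exact (@is_derive_plus C_AbsRing (AbsRing_NormedModule C_AbsRing) f g z a b). Qed.

Lemma is_derive_C_comp f g z a b :
  is_derive_C f (g z) a -> is_derive_C g z b -> is_derive_C (fun w => f (g w)) z (Cmult b a).
Proof. exact (@is_derive_comp C_AbsRing (AbsRing_NormedModule C_AbsRing) f g z a b). Qed.

Lemma is_derive_C_mult f g z a b :
  is_derive_C f z a -> is_derive_C g z b ->
  is_derive_C (fun w => Cmult (f w) (g w)) z (Cplus (Cmult a (g z)) (Cmult (f z) b)).
Proof.
  intros Hf Hg.
  eapply filterdiff_ext_lin.
  - exact (@filterdiff_mult_fct C_AbsRing (AbsRing_NormedModule C_AbsRing) f g z _ _
             Cmult_comm Hf Hg).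
  - intros y. simpl.
    change (Cplus (Cmult (Cmult y a) (g z)) (Cmult (f z) (Cmult y b))
            = Cmult y (Cplus (Cmult a (g z)) (Cmult (f z) b))).
    ring.
Qed.

Lemma is_derive_C_scal c f z l :
  is_derive_C f z l -> is_derive_C (fun w => Cmult c (f w)) z (Cmult c l).
Proof.
  intros H. eapply is_derive_C_val; [apply is_derive_C_mult; [apply is_derive_C_const | exact H]|].
  rewrite Cmult_0_l, Cplus_0_l. reflexivity.
Qed.

Lemma is_derive_C_affine a b z : is_derive_C (fun w => Cplus a (Cmult b w)) z b.
Proof.
  eapply is_derive_C_val.
  - apply is_derive_C_plus; [apply is_derive_C_const | apply is_derive_C_scal, is_derive_C_id].
  - rewrite Cplus_0_l, Cmult_1_r. reflexivity.
Qed.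

Lemma Cdiff_eps_cont f z l : Cdiff_eps f z l -> Ccont_at f z.
Proof.
  intros H eps Heps.
  destruct (H 1 Rlt_0_1) as [d [Hd Hw]].
  pose proof (Cmod_ge_0 l) as Hl.
  exists (Rmin d (eps / (Cmod l + 2))).
  split; [apply Rmin_pos; [lra | apply Rdiv_lt_0_compat; lra]|].
  intros w Hw'.
  pose proof (Rmin_l d (eps / (Cmod l + 2))). pose proof (Rmin_r d (eps / (Cmod l + 2))).
  specialize (Hw w ltac:(lra)).
  pose proof (Cmod_triangle (Cminus (Cminus (f w) (f z)) (Cmult l (Cminus w z)))
                            (Cmult l (Cminus w z))) as Htri.
  replace (Cplus (Cminus (Cminus (f w) (f z)) (Cmult l (Cminus w z))) (Cmult l (Cminus w z)))
    with (Cminus (f w) (f z)) in Htri by ring.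
  rewrite Cmod_mult in Htri. pose proof (Cmod_ge_0 (Cminus w z)).
  assert (Cmod (Cminus w z) * (Cmod l + 2) < eps).
  { apply (Rmult_lt_compat_r (Cmod l + 2)) in Hw'; [|lra].
    eapply Rlt_le_trans; [exact Hw'|].
    apply Rle_trans with (eps / (Cmod l + 2) * (Cmod l + 2)).
    - apply Rmult_le_compat_r; lra.
    - right. field. lra. }
  nra.
Qed.

Lemma Ccont_at_minus g1 g2 p : Ccont_at g1 p -> Ccont_at g2 p ->
  Ccont_at (fun w => Cminus (g1 w) (g2 w)) p.
Proof.
  intros H1 H2 eps Heps.
  destruct (H1 (eps / 2)) as [d1 [Hd1 K1]]; [lra|]. destruct (H2 (eps / 2)) as [d2 [Hd2 K2]]; [lra|].
  exists (Rmin d1 d2). split; [apply Rmin_pos; auto|]. intros w Hw.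
  specialize (K1 w (Rlt_le_trans _ _ _ Hw (Rmin_l _ _))).
  specialize (K2 w (Rlt_le_trans _ _ _ Hw (Rmin_r _ _))).
  replace (Cminus (Cminus (g1 w) (g2 w)) (Cminus (g1 p) (g2 p)))
    with (Cplus (Cminus (g1 w) (g1 p)) (Copp (Cminus (g2 w) (g2 p)))) by ring.
  eapply Rle_lt_trans; [apply Cmod_triangle|]. rewrite Cmod_opp. lra.
Qed.

Lemma Ccont_at_const c z : Ccont_at (fun _ => c) z.
Proof.
  intros eps Heps. exists 1. split; [lra|]. intros w _.
  replace (Cminus c c) with (RtoC 0) by ring. rewrite Cmod_0. exact Heps.
Qed.

Lemma Ccont_at_bounded g z : Ccont_at g z ->
  exists d M, 0 < d /\ forall w, Cmod (Cminus w z) < d -> Cmod (g w) <= M.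
Proof.
  intros H. destruct (H 1 Rlt_0_1) as [d [Hd Hw]].
  exists d, (Cmod (g z) + 1). split; [exact Hd|]. intros w Hwz.
  specialize (Hw w Hwz). pose proof (Cmod_minus_le (g w) (g z)). lra.
Qed.

Lemma is_derive_C_cont f z l : is_derive_C f z l -> Ccont_at f z.
Proof. intros H. apply (Cdiff_eps_cont f z l), is_derive_C_eps, H. Qed.

Lemma is_derive_C_inv z : z <> RtoC 0 -> is_derive_C Cinv z (Copp (Cinv (Cmult z z))).
Proof.
  intros Hz. apply is_derive_C_eps. intros eps Heps.
  assert (Hm : 0 < Cmod z) by (apply Cmod_gt_0; auto).
  set (m := Cmod z) in *.
  assert (Hm3 : 0 < m * m * m) by (repeat apply Rmult_lt_0_compat; lra).
  exists (Rmin (m / 2) (eps * (m * m * m) / 2)).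
  split; [apply Rmin_pos; [lra | apply Rdiv_lt_0_compat; nra]|].
  intros w Hw.
  pose proof (Rmin_l (m / 2) (eps * (m * m * m) / 2)) as Hw1.
  pose proof (Rmin_r (m / 2) (eps * (m * m * m) / 2)) as Hw2.
  pose proof (Cmod_minus_le z w) as Hwm. rewrite Cmod_minus_sym in Hwm. fold m in Hwm.
  assert (Hw0 : w <> RtoC 0) by (intros ->; rewrite Cmod_0 in Hwm; lra).
  replace (Cminus (Cminus (Cinv w) (Cinv z)) (Cmult (Copp (Cinv (Cmult z z))) (Cminus w z)))
    with (Cmult (Cmult (Cminus w z) (Cminus w z)) (Cinv (Cmult w (Cmult z z))))
    by (field; split; auto).
  rewrite Cmod_mult, Cmod_mult, Cmod_inv, !Cmod_mult by (repeat apply Cmult_neq_0; auto).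
  fold m. set (d := Cmod (Cminus w z)) in *.
  pose proof (Cmod_ge_0 (Cminus w z)) as Hd. fold d in Hd.
  assert (Hp : 0 < Cmod w * (m * m)) by (apply Rmult_lt_0_compat; nra).
  apply (Rmult_le_reg_r (Cmod w * (m * m))); auto.
  rewrite Rmult_assoc, Rinv_l, Rmult_1_r by lra.
  assert (d * d <= d * (eps * (m * m * m) / 2)) by nra.
  assert (eps * d * (m * m * m / 2) <= eps * d * (Cmod w * (m * m)))
    by (apply Rmult_le_compat_l; nra).
  nra.
Qed.

Lemma derivable_pt_lim_remainder f x l : derivable_pt_lim f x l ->
  forall eps, 0 < eps -> exists del, 0 < del /\ forall h, Rabs h < del ->
    Rabs (f (x + h) - f x - l * h) <= eps * Rabs h.
Proof.
  intros H eps Heps. destruct (H eps Heps) as [d Hd].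
  exists d. split; [apply cond_pos|]. intros h Hh.
  destruct (Req_dec h 0) as [->|Hn].
  - rewrite Rplus_0_r, Rabs_R0, Rmult_0_r, Rminus_diag, Rminus_0_l, Ropp_0, Rabs_R0. lra.
  - replace (f (x + h) - f x - l * h) with (((f (x + h) - f x) / h - l) * h) by (field; auto).
    rewrite Rabs_mult. apply Rmult_le_compat_r; [apply Rabs_pos | left; apply Hd; auto].
Qed.

Lemma Cexp_add a b : Cexp (Cplus a b) = Cmult (Cexp a) (Cexp b).
Proof.
  destruct a as [a1 a2], b as [b1 b2]. unfold Cexp, Cmult, Cplus; simpl.
  rewrite exp_plus, cos_plus, sin_plus. f_equal; ring.
Qed.

Lemma Cexp_0 : Cexp (RtoC 0) = RtoC 1.
Proof. unfold Cexp, RtoC; simpl. rewrite exp_0, cos_0, sin_0. f_equal; ring. Qed.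

Lemma Cmod_Cexp w : Cmod (Cexp w) = exp (fst w).
Proof.
  destruct w as [x y]. unfold Cexp, Cmod; simpl.
  replace (exp x * cos y * (exp x * cos y * 1) + exp x * sin y * (exp x * sin y * 1))
    with (exp x * exp x * (sin y ^ 2 + cos y ^ 2)) by ring.
  rewrite <- !Rsqr_pow2, sin2_cos2, Rmult_1_r. apply sqrt_square. pose proof (exp_pos x); lra.
Qed.

Lemma Cexp_neq0 w : Cexp w <> RtoC 0.
Proof.
  intros H. pose proof (Cmod_Cexp w) as E. rewrite H, Cmod_0 in E.
  pose proof (exp_pos (fst w)). lra.
Qed.

Lemma Cexp_remainder_le a b e m : 0 <= e <= 1 -> m <= 1 -> Rabs a <= m -> Rabs b <= m ->
  Rabs (exp a - 1 - a) <= e * Rabs a -> Rabs (cos b - 1) <= e * Rabs b ->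
  Rabs (sin b - b) <= e * Rabs b ->
  Cmod (Cminus (Cminus (Cexp (a, b)) (RtoC 1)) (Cmult (RtoC 1) (a, b))) <= (5 * e + 4 * m) * m.
Proof.
  intros He Hm Ha Hb H1 H2 H3.
  replace (Cminus (Cminus (Cexp (a, b)) (RtoC 1)) (Cmult (RtoC 1) (a, b)))
    with ((exp a - 1 - a) + exp a * (cos b - 1), (exp a - 1) * sin b + (sin b - b) : R)
    by (unfold Cexp; apply injective_projections; simpl; ring).
  eapply Rle_trans; [apply Cmod_le_Rabs_sum|].
  pose proof (Rabs_pos a). pose proof (Rabs_pos b).
  assert (Hexp1 : Rabs (exp a - 1) <= 2 * Rabs a).
  { replace (exp a - 1) with ((exp a - 1 - a) + a) by ring.
    pose proof (Rabs_triang (exp a - 1 - a) a). nra. }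
  assert (Hexp : Rabs (exp a) <= 1 + 2 * m).
  { replace (exp a) with ((exp a - 1) + 1) by ring.
    pose proof (Rabs_triang (exp a - 1) 1) as T. rewrite Rabs_R1 in T. lra. }
  assert (Hsin : Rabs (sin b) <= 2 * Rabs b).
  { replace (sin b) with ((sin b - b) + b) by ring.
    pose proof (Rabs_triang (sin b - b) b). nra. }
  pose proof (Rabs_triang (exp a - 1 - a) (exp a * (cos b - 1))) as Tre.
  pose proof (Rabs_triang ((exp a - 1) * sin b) (sin b - b)) as Tim.
  rewrite Rabs_mult in Tre, Tim.
  assert (Rabs (exp a) * Rabs (cos b - 1) <= (1 + 2 * m) * (e * m))
    by (apply Rmult_le_compat; auto using Rabs_pos; nra).
  assert (Rabs (exp a - 1) * Rabs (sin b) <= (2 * m) * (2 * m))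
    by (apply Rmult_le_compat; auto using Rabs_pos; lra).
  assert (e * Rabs a <= e * m /\ e * Rabs b <= e * m) by (split; apply Rmult_le_compat_l; lra).
  assert (e * m * m <= e * m) by (assert (0 <= e * m) by (apply Rmult_le_pos; lra); nra).
  nra.
Qed.

Lemma Cdiff_eps_Cexp_0 : Cdiff_eps Cexp (RtoC 0) (RtoC 1).
Proof.
  intros eps Heps.
  set (e := Rmin 1 (eps / 20)).
  assert (He : 0 < e <= 1 /\ e <= eps / 20).
  { split; [split; [apply Rmin_pos | apply Rmin_l]; lra | apply Rmin_r]. }
  destruct (derivable_pt_lim_remainder _ _ _ derivable_pt_lim_exp_0 e ltac:(lra)) as [d1 [Hd1 H1]].
  destruct (derivable_pt_lim_remainder _ _ _ derivable_pt_lim_cos_0 e ltac:(lra)) as [d2 [Hd2 H2]].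
  destruct (derivable_pt_lim_remainder _ _ _ derivable_pt_lim_sin_0 e ltac:(lra)) as [d3 [Hd3 H3]].
  set (del := Rmin (Rmin d1 d2) (Rmin d3 (Rmin 1 (eps / 8)))).
  assert (Hdel : 0 < del /\ del <= d1 /\ del <= d2 /\ del <= d3 /\ del <= 1 /\ del <= eps / 8).
  { unfold del.
    pose proof (Rmin_l (Rmin d1 d2) (Rmin d3 (Rmin 1 (eps / 8)))).
    pose proof (Rmin_r (Rmin d1 d2) (Rmin d3 (Rmin 1 (eps / 8)))).
    pose proof (Rmin_l d1 d2). pose proof (Rmin_r d1 d2).
    pose proof (Rmin_l d3 (Rmin 1 (eps / 8))). pose proof (Rmin_r d3 (Rmin 1 (eps / 8))).
    pose proof (Rmin_l 1 (eps / 8)). pose proof (Rmin_r 1 (eps / 8)).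
    repeat split; try lra. repeat apply Rmin_pos; lra. }
  exists del. split; [lra|]. intros [a b] Hab.
  replace (Cminus (a, b) (RtoC 0)) with ((a, b) : C) in *
    by (apply injective_projections; simpl; ring).
  pose proof (re_le_Cmod (a, b)) as Ha. pose proof (Rabs_snd_le_Cmod (a, b)) as Hb.
  unfold Re in Ha; simpl in Ha, Hb. set (m := Cmod (a, b)) in *.
  specialize (H1 a ltac:(lra)). specialize (H2 b ltac:(lra)). specialize (H3 b ltac:(lra)).
  rewrite Rplus_0_l, exp_0, Rmult_1_l in H1. rewrite Rplus_0_l, cos_0, Rmult_0_l, Rminus_0_r in H2.
  rewrite Rplus_0_l, sin_0, Rminus_0_r, Rmult_1_l in H3.
  rewrite Cexp_0. eapply Rle_trans; [apply (Cexp_remainder_le a b e m); auto; lra|].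
  pose proof (Cmod_ge_0 (a, b)) as Hm0. fold m in Hm0. apply Rmult_le_compat_r; lra.
Qed.

Lemma is_derive_C_Cexp z : is_derive_C Cexp z (Cexp z).
Proof.
  apply is_derive_C_eps. intros eps Heps.
  set (c := Cmod (Cexp z) + 1).
  assert (Hc : 0 < c) by (pose proof (Cmod_ge_0 (Cexp z)); unfold c; lra).
  destruct (Cdiff_eps_Cexp_0 (eps / c) ltac:(apply Rdiv_lt_0_compat; lra)) as [d [Hd Hw]].
  exists d; split; [exact Hd|]. intros w Hw'.
  specialize (Hw (Cminus w z)).
  replace (Cminus (Cminus w z) (RtoC 0)) with (Cminus w z) in Hw by ring. specialize (Hw Hw').
  rewrite Cexp_0 in Hw.
  replace (Cminus (Cminus (Cexp w) (Cexp z)) (Cmult (Cexp z) (Cminus w z)))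
    with (Cmult (Cexp z)
            (Cminus (Cminus (Cexp (Cminus w z)) (RtoC 1)) (Cmult (RtoC 1) (Cminus w z)))).
  2: { replace (Cexp w) with (Cexp (Cplus z (Cminus w z))) by (f_equal; ring).
       rewrite Cexp_add. ring. }
  rewrite Cmod_mult.
  pose proof (Cmod_ge_0 (Cexp z)). pose proof (Cmod_ge_0 (Cminus w z)).
  eapply Rle_trans; [apply Rmult_le_compat_l; [auto | exact Hw]|].
  apply Rle_trans with (c * (eps / c * Cmod (Cminus w z))).
  - apply Rmult_le_compat_r; [|unfold c; lra].
    apply Rmult_le_pos; [left; apply Rdiv_lt_0_compat|]; lra.
  - right. field. lra.
Qed.

Lemma Arg_pos (w : C) : 0 < fst w -> Arg w = atan (snd w / fst w).
Proof. intros H. unfold Arg. destruct (Rlt_dec 0 (fst w)); [reflexivity | lra]. Qed.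

Lemma Cexp_Clog (w : C) : 0 < fst w -> Cexp (Clog w) = w.
Proof.
  intros H. destruct w as [x y]. simpl in H.
  unfold Cexp, Clog. simpl fst; simpl snd. rewrite Arg_pos by (simpl; lra). simpl.
  assert (Hm : 0 < Cmod (x, y)).
  { pose proof (re_le_Cmod (x, y)) as Hre. unfold Re in Hre. simpl in Hre.
    rewrite Rabs_right in Hre; lra. }
  rewrite exp_ln, cos_atan, sin_atan by auto.
  assert (E : sqrt (1 + (y / x)²) = Cmod (x, y) / x).
  { rewrite <- (sqrt_Rsqr (Cmod (x, y) / x)) by (left; apply Rdiv_lt_0_compat; lra).
    f_equal. unfold Cmod, Rsqr. simpl.
    replace (sqrt (x * (x * 1) + y * (y * 1)) / x * (sqrt (x * (x * 1) + y * (y * 1)) / x))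
      with (sqrt (x * (x * 1) + y * (y * 1)) * sqrt (x * (x * 1) + y * (y * 1)) / (x * x))
      by (field; lra).
    rewrite sqrt_sqrt by nra. field. lra. }
  rewrite E. f_equal; field; split; lra.
Qed.

Lemma ln_lipschitz a b m : 0 < m -> m <= a -> m <= b -> Rabs (ln a - ln b) <= Rabs (a - b) / m.
Proof.
  intros Hm Ha Hb.
  assert (Hmin : m <= Rmin b a) by (apply Rmin_glb; lra).
  destruct (MVT_abs ln (fun x => / x) b a) as [c [Hc Hcr]].
  { intros c Hc. apply derivable_pt_lim_ln. lra. }
  rewrite Hc, Rabs_right by (left; apply Rinv_0_lt_compat; lra).
  unfold Rdiv. rewrite Rmult_comm. apply Rmult_le_compat_l; [apply Rabs_pos|].
  apply Rinv_le_contravar; lra.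
Qed.

Lemma atan_lipschitz a b : Rabs (atan a - atan b) <= Rabs (a - b).
Proof.
  destruct (MVT_abs atan (fun x => / (1 + x ^ 2)) b a) as [c [Hc _]].
  { intros c _. apply derivable_pt_lim_atan. }
  rewrite Hc. rewrite <- (Rmult_1_l (Rabs (a - b))) at 2.
  apply Rmult_le_compat_r; [apply Rabs_pos|].
  rewrite Rabs_right by (left; apply Rinv_0_lt_compat; nra).
  rewrite <- Rinv_1. apply Rinv_le_contravar; nra.
Qed.

Lemma atan_ratio_lipschitz x y x0 y0 : 0 < x0 -> x0 / 2 < x ->
  Rabs (atan (y / x) - atan (y0 / x0))
  <= 2 * (x0 + Rabs y0) / (x0 * x0) * Cmod (Cminus (x, y) (x0, y0)).
Proof.
  intros Hx0 Hx.
  pose proof (re_le_Cmod (Cminus (x, y) (x0, y0))) as Hre.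
  pose proof (Rabs_snd_le_Cmod (Cminus (x, y) (x0, y0))) as Him.
  unfold Re in Hre; simpl in Hre, Him. set (d := Cmod (Cminus (x, y) (x0, y0))) in *.
  eapply Rle_trans; [apply atan_lipschitz|].
  replace (y / x - y0 / x0) with (((y + - y0) * x0 - y0 * (x + - x0)) / (x * x0)) by (field; lra).
  unfold Rdiv. rewrite Rabs_mult, Rabs_inv, (Rabs_right (x * x0)) by nra.
  assert (Hn : Rabs ((y + - y0) * x0 - y0 * (x + - x0)) <= d * (x0 + Rabs y0)).
  { eapply Rle_trans; [apply Rabs_triang|].
    rewrite Rabs_Ropp, !Rabs_mult, (Rabs_right x0) by lra. pose proof (Rabs_pos y0). nra. }
  assert (Hi : / (x * x0) <= 2 / (x0 * x0)).
  { replace (2 / (x0 * x0)) with (/ (x0 / 2 * x0)) by (field; lra).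
    apply Rinv_le_contravar; nra. }
  pose proof (Rabs_pos ((y + - y0) * x0 - y0 * (x + - x0))). pose proof (Rabs_pos y0).
  apply Rle_trans with (d * (x0 + Rabs y0) * (2 / (x0 * x0))).
  - apply Rmult_le_compat; auto. left; apply Rinv_0_lt_compat; nra.
  - right. field. lra.
Qed.

Lemma Clog_lipschitz (w0 : C) : 0 < fst w0 -> exists K, 0 < K /\
  forall w, Cmod (Cminus w w0) < fst w0 / 2 ->
    0 < fst w /\ Cmod (Cminus (Clog w) (Clog w0)) <= K * Cmod (Cminus w w0).
Proof.
  intros H. destruct w0 as [x0 y0]. simpl in H |- *.
  pose proof (re_le_Cmod (x0, y0)) as Hm0. unfold Re in Hm0; simpl in Hm0.
  rewrite Rabs_right in Hm0 by lra.
  exists (2 / Cmod (x0, y0) + 2 * (x0 + Rabs y0) / (x0 * x0)).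
  split; [pose proof (Rabs_pos y0); apply Rplus_lt_0_compat; apply Rdiv_lt_0_compat; nra|].
  intros [x y] Hw.
  pose proof (re_le_Cmod (Cminus (x, y) (x0, y0))) as Hx. unfold Re in Hx; simpl in Hx.
  set (d := Cmod (Cminus (x, y) (x0, y0))) in *.
  assert (Hxx : x0 / 2 < x) by (pose proof (Rle_abs (- (x + - x0))); rewrite Rabs_Ropp in *; lra).
  split; [simpl; lra|].
  unfold Clog. rewrite !Arg_pos by (simpl; lra). simpl fst; simpl snd.
  unfold Cminus at 1, Cplus, Copp. simpl.
  eapply Rle_trans; [apply Cmod_le_Rabs_sum|]. rewrite Rmult_plus_distr_r.
  apply Rplus_le_compat; [|apply atan_ratio_lipschitz; lra].
  pose proof (Cmod_minus_le (x, y) (x0, y0)) as Hle.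
  pose proof (Cmod_minus_le (x0, y0) (x, y)) as Hge.
  rewrite Cmod_minus_sym in Hge. fold d in Hle, Hge.
  eapply Rle_trans; [apply (ln_lipschitz _ _ (Cmod (x0, y0) / 2)); lra|].
  unfold Rdiv at 1. rewrite Rinv_div.
  replace (2 / Cmod (x0, y0) * d) with (d * (2 / Cmod (x0, y0))) by ring.
  apply Rmult_le_compat_r; [left; apply Rdiv_lt_0_compat; lra | apply Rabs_le; lra].
Qed.

(* [L w - L w0 - (w - w0)/d] is [-1/d] times the remainder of [E] between [L w0] and
   [L w], and the Lipschitz bound makes [L w] close to [L w0]. *)
Lemma Cdiff_eps_inverse (E L : C -> C) w0 d K r : d <> RtoC 0 -> 0 < K -> 0 < r ->
  (forall w, Cmod (Cminus w w0) < r ->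
     E (L w) = w /\ Cmod (Cminus (L w) (L w0)) <= K * Cmod (Cminus w w0)) ->
  Cdiff_eps E (L w0) d -> Cdiff_eps L w0 (Cinv d).
Proof.
  intros Hd HK Hr HL HE eps Heps.
  assert (Hm : 0 < Cmod d) by (apply Cmod_gt_0; auto).
  destruct (HL w0) as [E0 _]; [replace (Cminus w0 w0) with (RtoC 0) by ring; rewrite Cmod_0; lra|].
  destruct (HE (eps * Cmod d / K)) as [d1 [Hd1 H1]]; [apply Rdiv_lt_0_compat; nra|].
  exists (Rmin r (d1 / K)). split; [apply Rmin_pos; [lra | apply Rdiv_lt_0_compat; lra]|].
  intros w Hw. pose proof (Rmin_l r (d1 / K)). pose proof (Rmin_r r (d1 / K)).
  destruct (HL w ltac:(lra)) as [Ew Hlip].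
  assert (Hu : Cmod (Cminus (L w) (L w0)) < d1).
  { eapply Rle_lt_trans; [exact Hlip|].
    apply Rlt_le_trans with (K * (d1 / K)); [apply Rmult_lt_compat_l; lra | right; field; lra]. }
  specialize (H1 _ Hu). rewrite Ew, E0 in H1.
  replace (Cminus (Cminus (L w) (L w0)) (Cmult (Cinv d) (Cminus w w0)))
    with (Cmult (Copp (Cinv d)) (Cminus (Cminus w w0) (Cmult d (Cminus (L w) (L w0)))))
    by (field; auto).
  rewrite Cmod_mult, Cmod_opp, Cmod_inv by auto.
  apply (Rmult_le_reg_l (Cmod d)); auto. rewrite <- Rmult_assoc, Rinv_r, Rmult_1_l by lra.
  eapply Rle_trans; [exact H1|].
  pose proof (Cmod_ge_0 (Cminus (L w) (L w0))).
  apply Rle_trans with (eps * Cmod d / K * (K * Cmod (Cminus w w0))).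
  - apply Rmult_le_compat_l; auto. left. apply Rdiv_lt_0_compat; nra.
  - right. field. lra.
Qed.

Lemma is_derive_C_Clog (w0 : C) : 0 < fst w0 -> is_derive_C Clog w0 (Cinv w0).
Proof.
  intros H. destruct (Clog_lipschitz w0 H) as (K & HK & Hlip).
  assert (Hw0 : w0 <> RtoC 0) by (intros E; rewrite E in H; simpl in H; lra).
  apply is_derive_C_eps.
  apply (Cdiff_eps_inverse Cexp Clog w0 w0 K (fst w0 / 2)); auto; [lra| |].
  - intros w Hw. destruct (Hlip w Hw) as [Hre HL]. split; auto. apply Cexp_Clog, Hre.
  - pose proof (proj1 (is_derive_C_eps _ _ _) (is_derive_C_Cexp (Clog w0))) as HE.
    rewrite Cexp_Clog in HE by auto. exact HE.
Qed.

(** * The integrand of the Cesàro operator *)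

Lemma in_disc_0 : in_disc (RtoC 0).
Proof. unfold in_disc. rewrite Cmod_0. lra. Qed.

Lemma in_disc_re_1_minus (w : C) : in_disc w -> 0 < fst (Cminus (RtoC 1) w).
Proof.
  intros H. unfold in_disc in H. pose proof (re_le_Cmod w). pose proof (Rle_abs (fst w)).
  unfold Re in *. simpl. lra.
Qed.

Lemma Cpow_neq0 w b : Cpow w b <> RtoC 0.
Proof. apply Cexp_neq0. Qed.

Lemma Cmod_Cpow w b : Cmod (Cpow w b) = Rpower (Cmod w) b.
Proof. unfold Cpow, Rpower. rewrite Cmod_Cexp. unfold Clog. simpl. f_equal. ring. Qed.

Lemma Cpow_1 b : Cpow (RtoC 1) b = RtoC 1.
Proof.
  unfold Cpow, Clog. rewrite Cmod_1, ln_1, Arg_pos by (simpl; lra). simpl.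
  replace (0 / 1) with 0 by field. rewrite atan_0.
  replace (Cmult (RtoC b) (0, 0)) with (RtoC 0) by (apply injective_projections; simpl; ring).
  apply Cexp_0.
Qed.

Lemma is_derive_C_Cpow_1_minus beta w : in_disc w ->
  is_derive_C (fun u => Cpow (Cminus (RtoC 1) u) beta) w
    (Cmult (Cmult (RtoC beta) (Cmult (Copp (RtoC 1)) (Cinv (Cminus (RtoC 1) w))))
           (Cpow (Cminus (RtoC 1) w) beta)).
Proof.
  intros H. unfold Cpow.
  apply (is_derive_C_comp Cexp (fun u => Cmult (RtoC beta) (Clog (Cminus (RtoC 1) u))));
    [apply is_derive_C_Cexp|].
  apply is_derive_C_scal.
  apply (is_derive_C_comp Clog (fun u => Cminus (RtoC 1) u));
    [apply is_derive_C_Clog, in_disc_re_1_minus, H|].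
  apply is_derive_C_ext with (fun u => Cplus (RtoC 1) (Cmult (Copp (RtoC 1)) u));
    [intros; ring | apply is_derive_C_affine].
Qed.

Lemma is_derive_C_analytic f w : analytic_disc f -> in_disc w -> is_derive_C f w (C_derive f w).
Proof.
  intros Ha Hw. destruct (Ha w Hw) as [l Hl].
  rewrite (is_C_derive_unique f w l Hl). apply is_derive_C_Defs, Hl.
Qed.

Lemma Ccont_at_mult g h z : Ccont_at g z -> Ccont_at h z ->
  Ccont_at (fun w => Cmult (g w) (h w)) z.
Proof.
  intros Hg Hh eps Heps.
  set (a := Cmod (g z) + 1). set (b := Cmod (h z) + 1).
  assert (Ha : 1 <= a) by (pose proof (Cmod_ge_0 (g z)); unfold a; lra).
  assert (Hb : 1 <= b) by (pose proof (Cmod_ge_0 (h z)); unfold b; lra).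
  set (e := Rmin 1 (eps / (2 * (a + b)))).
  assert (He : 0 < e /\ e <= 1 /\ e * (a + b) <= eps / 2).
  { unfold e. split; [apply Rmin_pos; [lra | apply Rdiv_lt_0_compat; lra]|].
    split; [apply Rmin_l|].
    apply Rle_trans with (eps / (2 * (a + b)) * (a + b)).
    - apply Rmult_le_compat_r; [lra | apply Rmin_r].
    - right. field. lra. }
  destruct (Hg e ltac:(lra)) as [d1 [Hd1 H1]]. destruct (Hh e ltac:(lra)) as [d2 [Hd2 H2]].
  exists (Rmin d1 d2). split; [apply Rmin_pos; lra|]. intros w Hw.
  specialize (H1 w (Rlt_le_trans _ _ _ Hw (Rmin_l _ _))).
  specialize (H2 w (Rlt_le_trans _ _ _ Hw (Rmin_r _ _))).
  replace (Cminus (Cmult (g w) (h w)) (Cmult (g z) (h z)))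
    with (Cplus (Cmult (Cminus (g w) (g z)) (h w)) (Cmult (g z) (Cminus (h w) (h z)))) by ring.
  eapply Rle_lt_trans; [apply Cmod_triangle|]. rewrite !Cmod_mult.
  pose proof (Cmod_minus_le (h w) (h z)).
  pose proof (Cmod_ge_0 (Cminus (g w) (g z))). pose proof (Cmod_ge_0 (h w)).
  pose proof (Cmod_ge_0 (Cminus (h w) (h z))). pose proof (Cmod_ge_0 (g z)).
  assert (Cmod (h w) <= b) by (unfold b; lra).
  assert (Cmod (g z) <= a) by (unfold a; lra).
  apply Rle_lt_trans with (e * b + a * e).
  - apply Rplus_le_compat; apply Rmult_le_compat; lra.
  - nra.
Qed.

Lemma Ccont_at_slope_0 f l : f (RtoC 0) = RtoC 0 -> Cdiff_eps f (RtoC 0) l ->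
  Ccont_at (fun w => if Ceq_dec w (RtoC 0) then l else Cdiv (f w) w) (RtoC 0).
Proof.
  intros Hf0 Hf eps Heps. destruct (Hf (eps / 2) ltac:(lra)) as [d [Hd H]].
  exists d. split; [exact Hd|]. intros w Hw.
  destruct (Ceq_dec (RtoC 0) (RtoC 0)) as [_|E]; [|congruence].
  destruct (Ceq_dec w (RtoC 0)) as [->|Hw0].
  - replace (Cminus l l) with (RtoC 0) by ring. rewrite Cmod_0. lra.
  - specialize (H w Hw). rewrite Hf0 in H.
    replace (Cminus w (RtoC 0)) with w in H by ring.
    assert (Hm : 0 < Cmod w) by (apply Cmod_gt_0; auto).
    replace (Cminus (Cdiv (f w) w) l) with (Cdiv (Cminus (Cminus (f w) (RtoC 0)) (Cmult l w)) w)
      by (field; auto).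
    rewrite Cmod_div by auto.
    apply (Rmult_lt_reg_r (Cmod w)); auto. unfold Rdiv.
    rewrite Rmult_assoc, Rinv_l, Rmult_1_r by lra. nra.
Qed.

(* The integrand of [cesaro beta f] along rays, with its removable singularity
   at [0] filled in by [f'(0)]. *)
Definition cesaro_kernel (beta : R) (f : C -> C) (w : C) : C :=
  if Ceq_dec w (RtoC 0) then C_derive f (RtoC 0)
  else Cdiv (f w) (Cmult w (Cpow (Cminus (RtoC 1) w) beta)).

Definition cont_holo_off0 (g : C -> C) : Prop :=
  (forall w, in_disc w -> Ccont_at g w) /\
  (forall w, in_disc w -> w <> RtoC 0 -> exists l, is_derive_C g w l).

Lemma cesaro_kernel_derive beta f w : analytic_disc f -> in_disc w -> w <> RtoC 0 ->
  exists l, is_derive_C (cesaro_kernel beta f) w l.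
Proof.
  intros Ha Hw Hw0. eexists. eapply is_derive_C_ext_loc.
  - exists (Cmod w). split; [apply Cmod_gt_0; auto|]. intros u Hu.
    assert (u <> RtoC 0).
    { intros ->. rewrite Cmod_minus_sym in Hu.
      replace (Cminus w (RtoC 0)) with w in Hu by ring. lra. }
    unfold cesaro_kernel. destruct (Ceq_dec u (RtoC 0)) as [E|E]; [contradiction|].
    instantiate (1 := fun u => Cmult (f u) (Cinv (Cmult u (Cpow (Cminus (RtoC 1) u) beta)))).
    reflexivity.
  - apply is_derive_C_mult; [apply is_derive_C_analytic; auto|].
    apply (is_derive_C_comp Cinv (fun u => Cmult u (Cpow (Cminus (RtoC 1) u) beta))).
    + apply is_derive_C_inv, Cmult_neq_0; auto. apply Cpow_neq0.
    + apply is_derive_C_mult; [apply is_derive_C_id | apply is_derive_C_Cpow_1_minus; auto].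
Qed.

Lemma cesaro_kernel_cont_0 beta f : analytic_disc f -> f (RtoC 0) = RtoC 0 ->
  Ccont_at (cesaro_kernel beta f) (RtoC 0).
Proof.
  intros Ha Hf0.
  set (l := C_derive f (RtoC 0)).
  set (P := fun u => Cinv (Cpow (Cminus (RtoC 1) u) beta)).
  assert (HP : Ccont_at P (RtoC 0)).
  { eapply is_derive_C_cont, (is_derive_C_comp Cinv (fun u => Cpow (Cminus (RtoC 1) u) beta)).
    - apply is_derive_C_inv, Cpow_neq0.
    - apply is_derive_C_Cpow_1_minus, in_disc_0. }
  pose proof (Ccont_at_slope_0 f l Hf0
                (proj1 (is_derive_C_eps _ _ _) (is_derive_C_analytic f _ Ha in_disc_0))) as Hs.
  pose proof (Ccont_at_mult _ _ _ Hs HP) as H.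
  intros eps Heps. destruct (H eps Heps) as [d [Hd Hw]]. exists d. split; [exact Hd|].
  intros w Hw'. specialize (Hw w Hw').
  assert (Eq : forall u, Cmult (if Ceq_dec u (RtoC 0) then l else Cdiv (f u) u) (P u)
                         = cesaro_kernel beta f u).
  { intros u. unfold cesaro_kernel, P. fold l.
    destruct (Ceq_dec u (RtoC 0)) as [->|Hu].
    - replace (Cminus (RtoC 1) (RtoC 0)) with (RtoC 1) by ring. rewrite Cpow_1. field.
    - field. split; [apply Cpow_neq0 | exact Hu]. }
  rewrite !Eq in Hw. exact Hw.
Qed.

Lemma cont_holo_off0_cesaro_kernel beta f : in_B10 f -> cont_holo_off0 (cesaro_kernel beta f).
Proof.
  intros [[Ha _] Hf0]. split.
  - intros w Hw. destruct (Ceq_dec w (RtoC 0)) as [->|Hn]; [apply cesaro_kernel_cont_0; auto|].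
    destruct (cesaro_kernel_derive beta f w Ha Hw Hn) as [l Hl]. eapply is_derive_C_cont; eauto.
  - intros w Hw Hw0. apply cesaro_kernel_derive; auto.
Qed.

(** * Integrals along segments *)

Notation CV := C_R_CompleteNormedModule.

Definition seg_pt (a b : C) (t : R) : C := Cplus a (Cmult (RtoC t) (Cminus b a)).

Definition seg_integrand (g : C -> C) (a b : C) (t : R) : C := Cmult (g (seg_pt a b t)) (Cminus b a).

Definition seg_int (g : C -> C) (a b : C) : C := @RInt CV (seg_integrand g a b) 0 1.

Definition cont_on_seg (g : C -> C) (a b : C) : Prop :=
  forall t, 0 <= t <= 1 -> Ccont_at g (seg_pt a b t).

Lemma norm_C_R (x : C) : @norm R_AbsRing C_R_NormedModule x = Cmod x.
Proof.
  change (sqrt (Rabs (fst x) ^ 2 + Rabs (snd x) ^ 2) = Cmod x). unfold Cmod.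
  rewrite !pow2_abs. reflexivity.
Qed.

Lemma seg_pt_minus a b s t : Cminus (seg_pt a b s) (seg_pt a b t) = Cmult (RtoC (s - t)) (Cminus b a).
Proof. unfold seg_pt. rewrite RtoC_minus. ring. Qed.

Lemma seg_pt_minus_start a b t : Cminus (seg_pt a b t) a = Cmult (RtoC t) (Cminus b a).
Proof. unfold seg_pt. ring. Qed.

Lemma seg_integrand_cont g a b t : Ccont_at g (seg_pt a b t) ->
  @continuous R_UniformSpace (NormedModule.UniformSpace R_AbsRing C_R_NormedModule)
    (seg_integrand g a b) t.
Proof.
  intros Hg P HP. apply locally_C in HP. destruct HP as [eps He].
  set (m := Cmod (Cminus b a)). assert (Hm : 0 <= m) by apply Cmod_ge_0.
  destruct (Hg (eps / (m + 1))) as [d [Hd H]]; [apply Rdiv_lt_0_compat; [apply cond_pos | lra]|].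
  assert (Hd' : 0 < d / (m + 1)) by (apply Rdiv_lt_0_compat; lra).
  exists (mkposreal _ Hd'). intros s Hs. apply He. simpl in Hs.
  change (Rabs (s - t) < d / (m + 1)) in Hs.
  change (Cmod (Cminus (seg_integrand g a b s) (seg_integrand g a b t)) < eps).
  unfold seg_integrand.
  replace (Cminus (Cmult (g (seg_pt a b s)) (Cminus b a)) (Cmult (g (seg_pt a b t)) (Cminus b a)))
    with (Cmult (Cminus (g (seg_pt a b s)) (g (seg_pt a b t))) (Cminus b a)) by ring.
  rewrite Cmod_mult. fold m.
  assert (Hc : Cmod (Cminus (seg_pt a b s) (seg_pt a b t)) < d).
  { rewrite seg_pt_minus, Cmod_RtoC_mult. fold m. pose proof (Rabs_pos (s - t)).
    apply Rle_lt_trans with (Rabs (s - t) * (m + 1)); [apply Rmult_le_compat_l; lra|].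
    apply Rlt_le_trans with (d / (m + 1) * (m + 1)); [apply Rmult_lt_compat_r; lra|].
    right. field. lra. }
  specialize (H _ Hc).
  pose proof (Cmod_ge_0 (Cminus (g (seg_pt a b s)) (g (seg_pt a b t)))).
  apply Rle_lt_trans with (eps / (m + 1) * m); [apply Rmult_le_compat_r; lra|].
  pose proof (cond_pos eps).
  apply Rlt_le_trans with (eps / (m + 1) * (m + 1)).
  - apply Rmult_lt_compat_l; [apply Rdiv_lt_0_compat|]; lra.
  - right. field. lra.
Qed.

Lemma ex_RInt_seg_integrand g a b : cont_on_seg g a b -> ex_RInt (V := CV) (seg_integrand g a b) 0 1.
Proof.
  intros H. apply ex_RInt_continuous. intros t Ht.
  rewrite Rmin_left, Rmax_right in Ht by lra. apply seg_integrand_cont, H, Ht.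
Qed.

Lemma is_RInt_seg_int g a b : cont_on_seg g a b ->
  is_RInt (V := CV) (seg_integrand g a b) 0 1 (seg_int g a b).
Proof. intros H. apply (RInt_correct (V := CV)), ex_RInt_seg_integrand, H. Qed.

Ltac reparam_ring g :=
  match goal with |- Cmult (g ?x) _ = Cmult _ (Cmult (g ?y) _) => replace x with y by ring end;
  ring.

Lemma seg_int_reparam g p q s c (F : R -> C) :
  (forall t, Cmult (g (seg_pt p q t)) (Cminus q p) = Cmult (RtoC s) (F (s * t + c))) ->
  ex_RInt (V := CV) F c (s + c) ->
  seg_int g p q = RInt (V := CV) F c (s + c).
Proof.
  intros HF Hex. unfold seg_int. apply (is_RInt_unique (V := CV)).
  apply (is_RInt_ext (V := CV)) with (fun t => scal s (F (s * t + c))).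
  { intros t _. rewrite scal_R_Cmult. symmetry. apply HF. }
  apply (is_RInt_comp_lin (V := CV)).
  replace (s * 0 + c) with c by ring. replace (s * 1 + c) with (s + c) by ring.
  apply (RInt_correct (V := CV)), Hex.
Qed.

Lemma seg_int_split g a b (l : R) : cont_on_seg g a b -> 0 <= l <= 1 ->
  seg_int g a b = Cplus (seg_int g a (seg_pt a b l)) (seg_int g (seg_pt a b l) b).
Proof.
  intros H Hl. pose proof (ex_RInt_seg_integrand g a b H) as Hex.
  rewrite (seg_int_reparam g a (seg_pt a b l) l 0 (seg_integrand g a b)).
  - rewrite (seg_int_reparam g (seg_pt a b l) b (1 - l) l (seg_integrand g a b)).
    + rewrite Rplus_0_r. replace (1 - l + l) with 1 by ring.
      symmetry. apply (RInt_Chasles (V := CV)).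
      * apply (ex_RInt_Chasles_1 (V := CV)) with 1; auto.
      * apply (ex_RInt_Chasles_2 (V := CV)) with 0; auto.
    + intros t. unfold seg_integrand. unfold seg_pt. rewrite RtoC_plus, RtoC_mult, RtoC_minus.
      reparam_ring g.
    + replace (1 - l + l) with 1 by ring. apply (ex_RInt_Chasles_2 (V := CV)) with 0; auto.
  - intros t. unfold seg_integrand. unfold seg_pt. rewrite RtoC_plus, RtoC_mult.
    reparam_ring g.
  - rewrite Rplus_0_r. apply (ex_RInt_Chasles_1 (V := CV)) with 1; auto.
Qed.

Lemma seg_int_rev g a b : cont_on_seg g a b -> seg_int g b a = Copp (seg_int g a b).
Proof.
  intros H. pose proof (ex_RInt_seg_integrand g a b H) as Hex.
  rewrite (seg_int_reparam g b a (- (1)) 1 (seg_integrand g a b)).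
  - replace (- (1) + 1) with 0 by ring.
    rewrite <- (opp_RInt_swap (V := CV)) by exact Hex. reflexivity.
  - intros t. unfold seg_integrand, seg_pt. rewrite RtoC_plus, RtoC_mult, RtoC_opp.
    reparam_ring g.
  - replace (- (1) + 1) with 0 by ring. apply (ex_RInt_swap (V := CV)), Hex.
Qed.

Lemma seg_int_bound g a b M : cont_on_seg g a b ->
  (forall t, 0 <= t <= 1 -> Cmod (g (seg_pt a b t)) <= M) ->
  Cmod (seg_int g a b) <= M * Cmod (Cminus b a).
Proof.
  intros H HM. rewrite <- norm_C_R.
  replace (M * Cmod (Cminus b a)) with ((1 - 0) * (M * Cmod (Cminus b a))) by ring.
  apply (norm_RInt_le_const (V := C_R_NormedModule) (seg_integrand g a b)); [lra| |].
  - intros t Ht. rewrite norm_C_R. unfold seg_integrand. rewrite Cmod_mult.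
    apply Rmult_le_compat_r; [apply Cmod_ge_0 | apply HM, Ht].
  - apply is_RInt_seg_int, H.
Qed.

Lemma seg_int_minus g1 g2 a b : cont_on_seg g1 a b -> cont_on_seg g2 a b ->
  seg_int (fun w => Cminus (g1 w) (g2 w)) a b = Cminus (seg_int g1 a b) (seg_int g2 a b).
Proof.
  intros H1 H2. unfold seg_int. apply (is_RInt_unique (V := CV)).
  apply (is_RInt_ext (V := CV))
    with (fun t => minus (seg_integrand g1 a b t : CV) (seg_integrand g2 a b t)).
  - intros t _. unfold seg_integrand.
    change (Cminus (Cmult (g1 (seg_pt a b t)) (Cminus b a)) (Cmult (g2 (seg_pt a b t)) (Cminus b a))
            = Cmult (Cminus (g1 (seg_pt a b t)) (g2 (seg_pt a b t))) (Cminus b a)).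
    ring.
  - apply (is_RInt_minus (V := CV)); apply is_RInt_seg_int; auto.
Qed.

Lemma is_RInt_id_scal (c : C) : is_RInt (V := CV) (fun t => scal t c) 0 1 (scal (/ 2) c).
Proof.
  replace (scal (/ 2) c) with (minus (scal (1 * 1 / 2) c) (scal (0 * 0 / 2) c : CV)).
  - apply (is_RInt_derive (V := CV) (fun t => scal (t * t / 2) c)).
    + intros x _. apply (is_derive_scal_l (K := R_AbsRing) (V := C_R_NormedModule)).
      auto_derive; [auto | field].
    + intros x _.
      apply (continuous_scal_l (U := R_UniformSpace) (K := R_AbsRing) (V := C_R_NormedModule)).
      apply continuous_id.
  - rewrite !scal_R_Cmult.
    change (Cminus (Cmult (RtoC (1 * 1 / 2)) c) (Cmult (RtoC (0 * 0 / 2)) c) = Cmult (RtoC (/ 2)) c).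
    replace (1 * 1 / 2) with (/ 2) by field. replace (0 * 0 / 2) with 0 by field. ring.
Qed.

Lemma seg_int_affine c l a b :
  seg_int (fun w => Cplus c (Cmult l w)) a b =
  Cplus (Cmult (Cplus c (Cmult l a)) (Cminus b a))
        (Cmult (RtoC (/ 2)) (Cmult l (Cmult (Cminus b a) (Cminus b a)))).
Proof.
  unfold seg_int. apply (is_RInt_unique (V := CV)).
  apply (is_RInt_ext (V := CV)) with (fun t : R =>
    plus (Cmult (Cplus c (Cmult l a)) (Cminus b a) : CV)
         (scal t (Cmult l (Cmult (Cminus b a) (Cminus b a)) : CV))).
  - intros t _. rewrite scal_R_Cmult. unfold seg_integrand, seg_pt.
    change (Cplus (Cmult (Cplus c (Cmult l a)) (Cminus b a))
                  (Cmult (RtoC t) (Cmult l (Cmult (Cminus b a) (Cminus b a))))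
            = Cmult (Cplus c (Cmult l (Cplus a (Cmult (RtoC t) (Cminus b a))))) (Cminus b a)).
    ring.
  - replace (Cplus (Cmult (Cplus c (Cmult l a)) (Cminus b a))
                   (Cmult (RtoC (/ 2)) (Cmult l (Cmult (Cminus b a) (Cminus b a)))))
      with (plus (scal (1 - 0) (Cmult (Cplus c (Cmult l a)) (Cminus b a) : CV))
                 (scal (/ 2) (Cmult l (Cmult (Cminus b a) (Cminus b a)) : CV)) : CV).
    + apply (is_RInt_plus (V := CV)); [apply (is_RInt_const (V := CV)) | apply is_RInt_id_scal].
    + rewrite !scal_R_Cmult. replace (1 - 0) with 1 by ring.
      change (Cplus (Cmult (RtoC 1) (Cmult (Cplus c (Cmult l a)) (Cminus b a)))
                    (Cmult (RtoC (/ 2)) (Cmult l (Cmult (Cminus b a) (Cminus b a))))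
              = Cplus (Cmult (Cplus c (Cmult l a)) (Cminus b a))
                      (Cmult (RtoC (/ 2)) (Cmult l (Cmult (Cminus b a) (Cminus b a))))).
      ring.
Qed.

Lemma seg_int_ext g1 g2 a b : (forall w, g1 w = g2 w) -> seg_int g1 a b = seg_int g2 a b.
Proof.
  intros H. unfold seg_int, seg_integrand. apply (RInt_ext (V := CV)).
  intros t _. rewrite H. reflexivity.
Qed.

Lemma seg_int_const c a b : seg_int (fun _ => c) a b = Cmult c (Cminus b a).
Proof.
  rewrite (seg_int_ext _ (fun w => Cplus c (Cmult (RtoC 0) w))) by (intros; ring).
  rewrite seg_int_affine. ring.
Qed.

Lemma seg_int_same g p : seg_int g p p = RtoC 0.
Proof.
  transitivity (seg_int (fun _ => RtoC 0) p p); [|rewrite seg_int_const; ring].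
  unfold seg_int, seg_integrand. apply (RInt_ext (V := CV)). intros t _.
  change (Cmult (g (seg_pt p p t)) (Cminus p p) = Cmult (RtoC 0) (Cminus p p)). ring.
Qed.

(** * Goursat's lemma *)

Lemma pow_half_small (p : R) : forall eps, 0 < eps -> exists N, p * (/ 2) ^ N < eps.
Proof.
  intros eps Heps. pose proof (Rabs_pos p).
  destruct (pow_lt_1_zero (/ 2) ltac:(rewrite Rabs_right; lra) (eps / (Rabs p + 1)))
    as [N HN]; [apply Rdiv_lt_0_compat; lra|].
  exists N. specialize (HN N (le_n N)).
  rewrite Rabs_right in HN by (left; apply pow_lt; lra).
  pose proof (Rle_abs p). assert (0 < (/ 2) ^ N) by (apply pow_lt; lra).
  apply Rle_lt_trans with ((Rabs p + 1) * (/ 2) ^ N); [nra|].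
  apply Rlt_le_trans with ((Rabs p + 1) * (eps / (Rabs p + 1))).
  - apply Rmult_lt_compat_l; lra.
  - right. field. lra.
Qed.

Lemma pow_half_antitone n m : (n <= m)%nat -> (/ 2) ^ m <= (/ 2) ^ n.
Proof.
  intros Hnm. rewrite !pow_inv. pose proof (pow_lt 2 n ltac:(lra)) as H2n.
  apply Rinv_le_contravar; [exact H2n | apply Rle_pow; [lra | exact Hnm]].
Qed.

Lemma Cauchy_bound_limit_R (x : nat -> R) (q : R) :
  (forall n m, (n <= m)%nat -> Rabs (x m - x n) <= q * (/ 2) ^ n) ->
  exists l, forall n, Rabs (l - x n) <= q * (/ 2) ^ n.
Proof.
  intros H.
  assert (Hc : Cauchy_crit x).
  { intros eps Heps. destruct (pow_half_small q eps Heps) as [N HN].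
    assert (Hmono : forall n, (N <= n)%nat -> q * (/ 2) ^ n <= q * (/ 2) ^ N).
    { intros n Hn. pose proof (H N n Hn). pose proof (Rabs_pos (x n - x N)).
      assert (0 <= q) by (pose proof (pow_lt (/ 2) N ltac:(lra)); nra).
      apply Rmult_le_compat_l; auto. apply pow_half_antitone, Hn. }
    exists N. intros n m Hn Hm. unfold Rdist.
    destruct (Nat.le_ge_cases n m) as [L|L].
    - rewrite Rabs_minus_sym. specialize (H n m L). specialize (Hmono n Hn). lra.
    - specialize (H m n L). specialize (Hmono m Hm). lra. }
  destruct (Rcomplete.R_complete x Hc) as [l Hl].
  exists l. intros n. apply Rle_plus_epsilon. intros eps Heps.
  destruct (Hl eps Heps) as [N HN].
  specialize (HN (Nat.max N n) ltac:(lia)). unfold Rdist in HN.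
  specialize (H n (Nat.max N n) ltac:(lia)).
  replace (l - x n) with ((x (Nat.max N n) - x n) - (x (Nat.max N n) - l)) by ring.
  eapply Rle_trans; [apply Rabs_triang|]. rewrite Rabs_Ropp. lra.
Qed.

Lemma Cauchy_bound_limit_C (a : nat -> C) (q : R) :
  (forall n m, (n <= m)%nat -> Cmod (Cminus (a m) (a n)) <= q * (/ 2) ^ n) ->
  exists p, forall n, Cmod (Cminus p (a n)) <= 2 * (q * (/ 2) ^ n).
Proof.
  intros H.
  destruct (Cauchy_bound_limit_R (fun n => fst (a n)) q) as [x Hx].
  { intros n m Hnm. eapply Rle_trans; [|apply (H n m Hnm)]. apply (re_le_Cmod (Cminus (a m) (a n))). }
  destruct (Cauchy_bound_limit_R (fun n => snd (a n)) q) as [y Hy].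
  { intros n m Hnm. eapply Rle_trans; [|apply (H n m Hnm)].
    apply (Rabs_snd_le_Cmod (Cminus (a m) (a n))). }
  exists (x, y). intros n. specialize (Hx n). specialize (Hy n).
  unfold Cminus, Cplus, Copp. simpl. eapply Rle_trans; [apply Cmod_le_Rabs_sum|].
  unfold Rminus in Hx, Hy. lra.
Qed.

Definition convex (U : C -> Prop) : Prop :=
  forall p q t, U p -> U q -> 0 <= t <= 1 -> U (seg_pt p q t).

Definition closed_C (U : C -> Prop) : Prop :=
  forall p, (forall eps, 0 < eps -> exists w, U w /\ Cmod (Cminus p w) < eps) -> U p.

Definition holo_on (U : C -> Prop) (g : C -> C) : Prop :=
  forall w, U w -> exists l, is_derive_C g w l.

Definition tri_int (g : C -> C) (a b c : C) : C :=
  Cplus (Cplus (seg_int g a b) (seg_int g b c)) (seg_int g c a).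

Definition perimeter (a b c : C) : R := Cmod (Cminus b a) + Cmod (Cminus c b) + Cmod (Cminus a c).

Definition on_sides (a b c w : C) : Prop :=
  exists t, 0 <= t <= 1 /\ (w = seg_pt a b t \/ w = seg_pt b c t \/ w = seg_pt c a t).

Definition mid (p q : C) : C := seg_pt p q (/ 2).

Lemma cont_on_seg_holo U g a b : convex U -> holo_on U g -> U a -> U b -> cont_on_seg g a b.
Proof.
  intros HU Hg Ha Hb t Ht. destruct (Hg _ (HU a b t Ha Hb Ht)) as [l Hl].
  eapply is_derive_C_cont, Hl.
Qed.

Lemma perimeter_ge0 a b c : 0 <= perimeter a b c.
Proof.
  unfold perimeter. pose proof (Cmod_ge_0 (Cminus b a)). pose proof (Cmod_ge_0 (Cminus c b)).
  pose proof (Cmod_ge_0 (Cminus a c)). lra.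
Qed.

Lemma on_sides_near_vertex a b c w : on_sides a b c w -> Cmod (Cminus w a) <= perimeter a b c.
Proof.
  intros (t & Ht & Hw). unfold perimeter. rewrite (Cmod_minus_sym a c).
  pose proof (Cmod_ge_0 (Cminus b a)). pose proof (Cmod_ge_0 (Cminus c b)).
  pose proof (Cmod_ge_0 (Cminus c a)).
  destruct Hw as [ -> | [ -> | -> ] ]; unfold seg_pt.
  - replace (Cminus (Cplus a (Cmult (RtoC t) (Cminus b a))) a) with (Cmult (RtoC t) (Cminus b a))
      by ring.
    rewrite Cmod_RtoC_mult, Rabs_right by lra. nra.
  - replace (Cminus (Cplus b (Cmult (RtoC t) (Cminus c b))) a)
      with (Cplus (Cminus b a) (Cmult (RtoC t) (Cminus c b))) by ring.
    eapply Rle_trans; [apply Cmod_triangle|]. rewrite Cmod_RtoC_mult, Rabs_right by lra. nra.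
  - replace (Cminus (Cplus c (Cmult (RtoC t) (Cminus a c))) a)
      with (Cmult (RtoC (1 - t)) (Cminus c a)) by (rewrite RtoC_minus; ring).
    rewrite Cmod_RtoC_mult, Rabs_right by lra. nra.
Qed.

Lemma tri_int_affine c l a b d : tri_int (fun w => Cplus c (Cmult l w)) a b d = RtoC 0.
Proof. unfold tri_int. rewrite !seg_int_affine, RtoC_inv by lra. field. Qed.

Lemma tri_int_approx_bound g c l a b d M :
  cont_on_seg g a b -> cont_on_seg g b d -> cont_on_seg g d a ->
  (forall w, on_sides a b d w -> Cmod (Cminus (g w) (Cplus c (Cmult l w))) <= M) ->
  Cmod (tri_int g a b d) <= M * perimeter a b d.
Proof.
  intros Hab Hbd Hda HM.
  (* subtract the affine function, whose integral over the triangle vanishes *)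
  set (A := fun w => Cplus c (Cmult l w)).
  assert (HA : forall p q, cont_on_seg A p q).
  { intros p q t _. eapply is_derive_C_cont, is_derive_C_affine. }
  assert (E : tri_int g a b d = tri_int (fun w => Cminus (g w) (A w)) a b d).
  { unfold tri_int. rewrite !seg_int_minus by auto.
    pose proof (tri_int_affine c l a b d) as E0. unfold tri_int in E0. fold A in E0.
    transitivity (Cminus (Cplus (Cplus (seg_int g a b) (seg_int g b d)) (seg_int g d a))
                         (Cplus (Cplus (seg_int A a b) (seg_int A b d)) (seg_int A d a)));
      [rewrite E0|]; ring. }
  assert (Hside : forall p q, cont_on_seg g p q ->
            (forall t, 0 <= t <= 1 -> on_sides a b d (seg_pt p q t)) ->
            Cmod (seg_int (fun w => Cminus (g w) (A w)) p q) <= M * Cmod (Cminus q p)).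
  { intros p q Hpq Hon. apply seg_int_bound.
    - intros t Ht. apply Ccont_at_minus; [apply Hpq, Ht | apply HA; exact Ht].
    - intros t Ht. apply HM, Hon, Ht. }
  rewrite E. unfold tri_int, perimeter.
  pose proof (Hside a b Hab (fun t Ht => ex_intro _ t (conj Ht (or_introl eq_refl)))).
  pose proof (Hside b d Hbd (fun t Ht => ex_intro _ t (conj Ht (or_intror (or_introl eq_refl))))).
  pose proof (Hside d a Hda (fun t Ht => ex_intro _ t (conj Ht (or_intror (or_intror eq_refl))))).
  eapply Rle_trans; [apply Cmod_triangle|].
  eapply Rle_trans; [apply Rplus_le_compat_r, Cmod_triangle|]. lra.
Qed.

Lemma tri_int_subdiv U g a b c : convex U -> holo_on U g -> U a -> U b -> U c ->
  tri_int g a b c =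
  Cplus (Cplus (tri_int g a (mid a b) (mid c a)) (tri_int g (mid a b) b (mid b c)))
        (Cplus (tri_int g (mid c a) (mid b c) c) (tri_int g (mid a b) (mid b c) (mid c a))).
Proof.
  intros HU Hg Ha Hb Hc.
  assert (Hhalf : 0 <= / 2 <= 1) by lra.
  assert (Hab := HU _ _ _ Ha Hb Hhalf). assert (Hbc := HU _ _ _ Hb Hc Hhalf).
  assert (Hca := HU _ _ _ Hc Ha Hhalf).
  pose proof (cont_on_seg_holo U g) as K.
  unfold tri_int.
  rewrite (seg_int_split g a b (/ 2)), (seg_int_split g b c (/ 2)), (seg_int_split g c a (/ 2))
    by auto.
  fold (mid a b) (mid b c) (mid c a).
  rewrite (seg_int_rev g (mid a b) (mid c a)), (seg_int_rev g (mid a b) (mid b c)),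
    (seg_int_rev g (mid b c) (mid c a)) by auto.
  ring.
Qed.

Definition triangle := (C * C * C)%type.

Definition subtriangle (k : nat) (T : triangle) : triangle :=
  let '(a, b, c) := T in
  match k with
  | O => (a, mid a b, mid c a)
  | 1%nat => (mid a b, b, mid b c)
  | 2%nat => (mid c a, mid b c, c)
  | _ => (mid a b, mid b c, mid c a)
  end.

Definition tri_intT (g : C -> C) (T : triangle) : C := let '(a, b, c) := T in tri_int g a b c.
Definition perimeterT (T : triangle) : R := let '(a, b, c) := T in perimeter a b c.
Definition inT (U : C -> Prop) (T : triangle) : Prop := let '(a, b, c) := T in U a /\ U b /\ U c.
Definition vertexT (T : triangle) : C := let '(a, _, _) := T in a.

Lemma perimeterT_ge0 T : 0 <= perimeterT T.
Proof. destruct T as [[a b] c]. apply perimeter_ge0. Qed.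

Lemma Cmod_half_side x y p q : Cminus x y = Cmult (RtoC (/ 2)) (Cminus p q) ->
  Cmod (Cminus x y) = / 2 * Cmod (Cminus p q).
Proof. intros ->. rewrite Cmod_RtoC_mult, Rabs_right by lra. reflexivity. Qed.

Ltac half_side x y p q :=
  rewrite (Cmod_half_side x y p q)
    by (unfold mid, seg_pt; rewrite RtoC_inv by lra; field; intros E; apply RtoC_inj in E; lra).

Lemma perimeter_subtriangle k T : perimeterT (subtriangle k T) = / 2 * perimeterT T.
Proof.
  destruct T as [[a b] c]. unfold perimeterT, perimeter.
  destruct k as [|[|[|k]]]; simpl.
  - half_side (mid a b) a b a. half_side (mid c a) (mid a b) c b. half_side a (mid c a) a c. ring.
  - half_side b (mid a b) b a. half_side (mid b c) b c b. half_side (mid a b) (mid b c) a c. ring.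
  - half_side (mid b c) (mid c a) b a. half_side c (mid b c) c b. half_side (mid c a) c a c. ring.
  - half_side (mid b c) (mid a b) c a. half_side (mid c a) (mid b c) a b.
    half_side (mid a b) (mid c a) b c.
    rewrite (Cmod_minus_sym c a), (Cmod_minus_sym a b), (Cmod_minus_sym b c). ring.
Qed.

Lemma inT_subtriangle U k T : convex U -> inT U T -> inT U (subtriangle k T).
Proof.
  intros HU. destruct T as [[a b] c]. intros (Ha & Hb & Hc).
  assert (Hhalf : 0 <= / 2 <= 1) by lra.
  assert (Hab := HU _ _ _ Ha Hb Hhalf). assert (Hbc := HU _ _ _ Hb Hc Hhalf).
  assert (Hca := HU _ _ _ Hc Ha Hhalf).
  destruct k as [|[|[|k]]]; simpl; auto.
Qed.

Lemma vertex_subtriangle k T : Cmod (Cminus (vertexT (subtriangle k T)) (vertexT T)) <= perimeterT T.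
Proof.
  destruct T as [[a b] c]. unfold perimeterT, perimeter.
  pose proof (Cmod_ge_0 (Cminus c a)).
  pose proof (Cmod_ge_0 (Cminus c b)). pose proof (Cmod_ge_0 (Cminus b a)).
  rewrite (Cmod_minus_sym a c).
  destruct k as [|[|[|k]]]; simpl.
  - replace (Cminus a a) with (RtoC 0) by ring. rewrite Cmod_0. lra.
  - half_side (mid a b) a b a. lra.
  - half_side (mid c a) a c a. lra.
  - half_side (mid a b) a b a. lra.
Qed.

(* One of the four subtriangles carries at least a quarter of the integral. *)
Definition pick_subtriangle (g : C -> C) (T : triangle) : triangle :=
  let big k := Rle_dec (Cmod (tri_intT g T) / 4) (Cmod (tri_intT g (subtriangle k T))) in
  if big 0%nat then subtriangle 0 T
  else if big 1%nat then subtriangle 1 T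
  else if big 2%nat then subtriangle 2 T
  else subtriangle 3 T.

Lemma pick_subtriangle_spec U g T : convex U -> holo_on U g -> inT U T ->
  exists k, pick_subtriangle g T = subtriangle k T /\
    Cmod (tri_intT g T) / 4 <= Cmod (tri_intT g (pick_subtriangle g T)).
Proof.
  intros HU Hg HT. unfold pick_subtriangle.
  destruct (Rle_dec _ _) as [P0|P0]; [exists 0%nat; auto|].
  destruct (Rle_dec _ _) as [P1|P1]; [exists 1%nat; auto|].
  destruct (Rle_dec _ _) as [P2|P2]; [exists 2%nat; auto|].
  exists 3%nat. split; [reflexivity|].
  destruct T as [[a b] c]. destruct HT as (Ha & Hb & Hc). simpl in *.
  apply Rnot_le_lt in P0, P1, P2.
  rewrite (tri_int_subdiv U g a b c) in * by auto.
  set (x0 := tri_int g a (mid a b) (mid c a)) in *.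
  set (x1 := tri_int g (mid a b) b (mid b c)) in *.
  set (x2 := tri_int g (mid c a) (mid b c) c) in *.
  set (x3 := tri_int g (mid a b) (mid b c) (mid c a)) in *.
  pose proof (Cmod_triangle (Cplus x0 x1) (Cplus x2 x3)).
  pose proof (Cmod_triangle x0 x1). pose proof (Cmod_triangle x2 x3). lra.
Qed.

Definition nested_triangles (g : C -> C) (T : triangle) (n : nat) : triangle :=
  Nat.iter n (pick_subtriangle g) T.

Lemma nested_triangles_spec U g T : convex U -> holo_on U g -> inT U T -> forall n,
  inT U (nested_triangles g T n) /\
  perimeterT (nested_triangles g T n) = perimeterT T * (/ 2) ^ n /\
  Cmod (tri_intT g T) * (/ 4) ^ n <= Cmod (tri_intT g (nested_triangles g T n)) /\
  Cmod (Cminus (vertexT (nested_triangles g T (S n))) (vertexT (nested_triangles g T n)))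
    <= perimeterT (nested_triangles g T n).
Proof.
  intros HU Hg HT. induction n as [|n IH].
  - destruct (pick_subtriangle_spec U g T HU Hg HT) as (k & Ek & _).
    simpl. rewrite Ek. repeat split; [exact HT | ring | lra | apply vertex_subtriangle].
  - destruct IH as (I1 & I2 & I3 & _).
    change (nested_triangles g T (S n)) with (pick_subtriangle g (nested_triangles g T n)).
    change (nested_triangles g T (S (S n)))
      with (pick_subtriangle g (pick_subtriangle g (nested_triangles g T n))).
    destruct (pick_subtriangle_spec U g _ HU Hg I1) as (k & Ek & Hk).
    assert (I1' : inT U (pick_subtriangle g (nested_triangles g T n)))
      by (rewrite Ek; apply inT_subtriangle; auto).
    destruct (pick_subtriangle_spec U g _ HU Hg I1') as (k' & Ek' & _).
    repeat split.
    + exact I1'.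
    + rewrite Ek, perimeter_subtriangle, I2. simpl. ring.
    + simpl. pose proof (pow_lt (/ 4) n ltac:(lra)). lra.
    + rewrite Ek'. apply vertex_subtriangle.
Qed.

Lemma nested_vertices_limit U g T : convex U -> holo_on U g -> inT U T ->
  exists p, forall n,
    Cmod (Cminus p (vertexT (nested_triangles g T n))) <= 4 * perimeterT T * (/ 2) ^ n.
Proof.
  intros HU Hg HT. pose proof (nested_triangles_spec U g T HU Hg HT) as Hspec.
  set (v := fun n => vertexT (nested_triangles g T n)).
  assert (Hstep : forall n j, Cmod (Cminus (v (n + j)%nat) (v n))
                              <= 2 * perimeterT T * (/ 2) ^ n * (1 - (/ 2) ^ j)).
  { intros n j. induction j as [|j IH].
    - rewrite Nat.add_0_r. replace (Cminus (v n) (v n)) with (RtoC 0) by ring.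
      rewrite Cmod_0. simpl. lra.
    - destruct (Hspec (n + j)%nat) as (_ & P2 & _ & P4).
      change (Cmod (Cminus (v (S (n + j))) (v (n + j)%nat))
              <= perimeterT (nested_triangles g T (n + j))) in P4.
      rewrite Nat.add_succ_r.
      replace (Cminus (v (S (n + j))) (v n))
        with (Cplus (Cminus (v (S (n + j))) (v (n + j)%nat)) (Cminus (v (n + j)%nat) (v n)))
        by ring.
      eapply Rle_trans; [apply Cmod_triangle|]. rewrite P2, pow_add in P4. simpl. lra. }
  destruct (Cauchy_bound_limit_C v (2 * perimeterT T)) as [p Hp].
  - intros n m Hnm. replace m with (n + (m - n))%nat by lia.
    eapply Rle_trans; [apply Hstep|].
    pose proof (perimeterT_ge0 T).
    pose proof (pow_lt (/ 2) n ltac:(lra)). pose proof (pow_lt (/ 2) (m - n) ltac:(lra)).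
    assert (0 <= perimeterT T * (/ 2) ^ n) by nra. nra.
  - exists p. intros n. specialize (Hp n). unfold v in Hp. lra.
Qed.

Lemma closed_C_limit (U : C -> Prop) (v : nat -> C) p K : closed_C U -> (forall n, U (v n)) ->
  (forall n, Cmod (Cminus p (v n)) <= K * (/ 2) ^ n) -> U p.
Proof.
  intros HU Hv Hp. apply HU. intros eps Heps.
  destruct (pow_half_small (2 * K) eps Heps) as [N HN].
  exists (v N). split; [apply Hv|]. specialize (Hp N).
  pose proof (Cmod_ge_0 (Cminus p (v N))). pose proof (pow_lt (/ 2) N ltac:(lra)).
  assert (0 <= K) by nra. nra.
Qed.

Lemma tri_int_tangent_bound g a b c p l e del r :
  cont_on_seg g a b -> cont_on_seg g b c -> cont_on_seg g c a -> 0 <= e ->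
  (forall w, Cmod (Cminus w p) < del ->
     Cmod (Cminus (Cminus (g w) (g p)) (Cmult l (Cminus w p))) <= e * Cmod (Cminus w p)) ->
  Cmod (Cminus p a) + perimeter a b c <= r -> r < del ->
  Cmod (tri_int g a b c) <= e * r * perimeter a b c.
Proof.
  intros Hab Hbc Hca He Hnear Hr Hdel.
  apply (tri_int_approx_bound g (Cminus (g p) (Cmult l p)) l); auto.
  intros w Hw. pose proof (on_sides_near_vertex a b c w Hw) as Hwa.
  assert (Hwp : Cmod (Cminus w p) <= r).
  { replace (Cminus w p) with (Cplus (Cminus w a) (Copp (Cminus p a))) by ring.
    eapply Rle_trans; [apply Cmod_triangle|]. rewrite Cmod_opp. lra. }
  replace (Cminus (g w) (Cplus (Cminus (g p) (Cmult l p)) (Cmult l w)))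
    with (Cminus (Cminus (g w) (g p)) (Cmult l (Cminus w p))) by ring.
  eapply Rle_trans; [apply Hnear; lra|]. apply Rmult_le_compat_l; lra.
Qed.

(* Goursat's lemma on a closed convex set, by the nested-triangles argument: the nested
   triangles shrink to a point [p] where [g] is differentiable, and comparing [g] with its
   tangent at [p] shows that the integral over the [n]-th triangle, which is at least
   [4^-n] times the original one, is [o(4^-n)]. *)
Theorem goursat U g a b c : convex U -> closed_C U -> holo_on U g -> U a -> U b -> U c ->
  tri_int g a b c = RtoC 0.
Proof.
  intros HU HUc Hg Ha Hb Hc.
  set (T := (a, b, c) : triangle). assert (HT : inT U T) by (simpl; auto).
  set (P := perimeter a b c). pose proof (perimeter_ge0 a b c) as HP. fold P in HP.
  pose proof (nested_triangles_spec U g T HU Hg HT) as Hspec.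
  destruct (nested_vertices_limit U g T HU Hg HT) as [p Hp].
  assert (HpU : U p).
  { apply (closed_C_limit U (fun n => vertexT (nested_triangles g T n)) p (4 * P) HUc); [|exact Hp].
    intros n. destruct (Hspec n) as (Hn & _). destruct (nested_triangles g T n) as [[x y] z].
    apply Hn. }
  destruct (Hg p HpU) as [l Hl]. apply is_derive_C_eps in Hl.
  apply Cmod_eq_0, Rle_antisym; [|apply Cmod_ge_0].
  apply Rle_plus_epsilon. intros eps Heps. rewrite Rplus_0_l.
  set (e := eps / (5 * (P * P) + 1)).
  assert (He : 0 < e) by (apply Rdiv_lt_0_compat; nra).
  destruct (Hl e He) as [del [Hdel Hnear]].
  destruct (pow_half_small (5 * P) del Hdel) as [n Hn].
  destruct (Hspec n) as (Hin & Hper & Hgrow & _). specialize (Hp n).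
  destruct (nested_triangles g T n) as [[an bn] cn]. simpl in Hin, Hper, Hgrow, Hp.
  destruct Hin as (Han & Hbn & Hcn). fold P in Hper, Hgrow, Hp.
  set (Pn := P * (/ 2) ^ n) in *.
  assert (Hpn : Cmod (Cminus p an) <= 4 * Pn) by (unfold Pn; lra).
  assert (Hdn : 5 * Pn < del) by (unfold Pn; lra).
  assert (HPn : 0 <= Pn) by (unfold Pn; pose proof (pow_lt (/ 2) n ltac:(lra)); nra).
  assert (Hsmall : Cmod (tri_int g an bn cn) <= e * (5 * Pn) * Pn).
  { rewrite <- Hper. apply (tri_int_tangent_bound g an bn cn p l e del);
      try (apply (cont_on_seg_holo U); auto); solve [exact Hnear | lra]. }
  assert (E4 : (/ 4) ^ n = (/ 2) ^ n * (/ 2) ^ n) by (rewrite <- Rpow_mult_distr; f_equal; field).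
  assert (H4 : 0 < (/ 4) ^ n) by (apply pow_lt; lra).
  assert (Hq : Cmod (tri_int g a b c) * (/ 4) ^ n <= e * (5 * (P * P)) * (/ 4) ^ n).
  { eapply Rle_trans; [exact Hgrow|]. eapply Rle_trans; [exact Hsmall|].
    unfold Pn. rewrite E4. right. ring. }
  apply Rmult_le_reg_r in Hq; [|exact H4].
  assert (e * (5 * (P * P) + 1) = eps) by (unfold e; field; nra).
  nra.
Qed.

(** * Triangles with a vertex at the origin *)

(* The closed disc of radius [rho] cut by the half-plane [Re (conj u * w) >= d]; for
   [d > 0] it avoids [0]. *)
Definition disc_halfplane (rho : R) (u : C) (d : R) (w : C) : Prop :=
  Cmod w <= rho /\ d <= fst (Cmult (Cconj u) w).

Lemma seg_pt_Cmod_le p q t r : 0 <= t <= 1 -> Cmod p <= r -> Cmod q <= r -> Cmod (seg_pt p q t) <= r.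
Proof.
  intros Ht Hp Hq. unfold seg_pt.
  replace (Cplus p (Cmult (RtoC t) (Cminus q p)))
    with (Cplus (Cmult (RtoC (1 - t)) p) (Cmult (RtoC t) q))
    by (rewrite RtoC_minus; ring).
  eapply Rle_trans; [apply Cmod_triangle|]. rewrite !Cmod_RtoC_mult, !Rabs_right by lra.
  pose proof (Cmod_ge_0 p). nra.
Qed.

Lemma convex_disc_halfplane rho u d : convex (disc_halfplane rho u d).
Proof.
  intros p q t [Hp1 Hp2] [Hq1 Hq2] Ht. split; [apply seg_pt_Cmod_le; auto|].
  replace (fst (Cmult (Cconj u) (seg_pt p q t)))
    with ((1 - t) * fst (Cmult (Cconj u) p) + t * fst (Cmult (Cconj u) q))
    by (destruct u, p, q; unfold seg_pt; simpl; ring).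
  nra.
Qed.

Lemma closed_C_disc_halfplane rho u d : closed_C (disc_halfplane rho u d).
Proof.
  intros p Hp. split; apply Rle_plus_epsilon; intros eps Heps.
  - destruct (Hp eps Heps) as (w & [Hw _] & Hpw).
    pose proof (Cmod_minus_le p w). lra.
  - destruct (Hp (eps / (Cmod u + 1))) as (w & [_ Hw] & Hpw);
      [pose proof (Cmod_ge_0 u); apply Rdiv_lt_0_compat; lra|].
    assert (E : fst (Cmult (Cconj u) w) - fst (Cmult (Cconj u) p)
                = fst (Cmult (Cconj u) (Cminus w p)))
      by (destruct u, w, p; simpl; ring).
    pose proof (re_le_Cmod (Cmult (Cconj u) (Cminus w p))) as Hre. unfold Re in Hre.
    rewrite Cmod_mult, Cmod_conj, Cmod_minus_sym in Hre. rewrite <- E in Hre.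
    pose proof (Rle_abs (fst (Cmult (Cconj u) w) - fst (Cmult (Cconj u) p))).
    pose proof (Cmod_ge_0 u). pose proof (Cmod_ge_0 (Cminus p w)).
    assert (Cmod u * Cmod (Cminus p w) <= eps).
    { apply Rle_trans with ((Cmod u + 1) * (eps / (Cmod u + 1))); [apply Rmult_le_compat; lra|].
      right. field. lra. }
    lra.
Qed.

Lemma in_disc_seg_pt p q t : in_disc p -> in_disc q -> 0 <= t <= 1 -> in_disc (seg_pt p q t).
Proof.
  unfold in_disc. intros Hp Hq Ht.
  eapply Rle_lt_trans; [apply (seg_pt_Cmod_le p q t (Rmax (Cmod p) (Cmod q))); auto; 
    [apply Rmax_l | apply Rmax_r]|].
  apply Rmax_lub_lt; auto.
Qed.

Lemma in_disc_scal e a : 0 <= e <= 1 -> in_disc a -> in_disc (Cmult (RtoC e) a).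
Proof.
  unfold in_disc. intros He Ha. rewrite Cmod_RtoC_mult, Rabs_right by lra.
  pose proof (Cmod_ge_0 a). nra.
Qed.

Lemma cont_on_seg_disc g p q : cont_holo_off0 g -> in_disc p -> in_disc q -> cont_on_seg g p q.
Proof. intros [H _] Hp Hq t Ht. apply H, in_disc_seg_pt; auto. Qed.

Lemma tri_int_0_shrink g a b e : cont_holo_off0 g -> in_disc a -> in_disc b -> 0 <= e <= 1 ->
  tri_int g (RtoC 0) a b =
  Cplus (Cplus (tri_int g (RtoC 0) (Cmult (RtoC e) a) (Cmult (RtoC e) b))
               (tri_int g (Cmult (RtoC e) a) a b))
        (tri_int g (Cmult (RtoC e) a) b (Cmult (RtoC e) b)).
Proof.
  intros Hg Ha Hb He.
  assert (Hea := in_disc_scal e a He Ha). assert (Heb := in_disc_scal e b He Hb).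
  pose proof (cont_on_seg_disc g) as K. pose proof in_disc_0.
  unfold tri_int.
  rewrite (seg_int_split g (RtoC 0) a e), (seg_int_split g b (RtoC 0) (1 - e)) by (auto; lra).
  replace (seg_pt (RtoC 0) a e) with (Cmult (RtoC e) a) by (unfold seg_pt; ring).
  replace (seg_pt b (RtoC 0) (1 - e)) with (Cmult (RtoC e) b)
    by (unfold seg_pt; rewrite RtoC_minus; ring).
  rewrite (seg_int_rev g (Cmult (RtoC e) a) (Cmult (RtoC e) b)), (seg_int_rev g (Cmult (RtoC e) a) b)
    by auto.
  ring.
Qed.

Lemma tri_int_0_small g a b e M d0 : cont_holo_off0 g -> in_disc a -> in_disc b -> 0 <= e <= 1 ->
  (forall w, Cmod w < d0 -> Cmod (g w) <= M) -> 4 * (e * Rmax (Cmod a) (Cmod b)) < d0 ->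
  Cmod (tri_int g (RtoC 0) (Cmult (RtoC e) a) (Cmult (RtoC e) b))
  <= M * (4 * (e * Rmax (Cmod a) (Cmod b))).
Proof.
  intros Hg Ha Hb He HM Hd.
  set (r := e * Rmax (Cmod a) (Cmod b)) in *.
  assert (Hea : Cmod (Cmult (RtoC e) a) <= r).
  { rewrite Cmod_RtoC_mult, Rabs_right by lra. apply Rmult_le_compat_l; [lra | apply Rmax_l]. }
  assert (Heb : Cmod (Cmult (RtoC e) b) <= r).
  { rewrite Cmod_RtoC_mult, Rabs_right by lra. apply Rmult_le_compat_l; [lra | apply Rmax_r]. }
  assert (Hper : perimeter (RtoC 0) (Cmult (RtoC e) a) (Cmult (RtoC e) b) <= 4 * r).
  { unfold perimeter.
    replace (Cminus (Cmult (RtoC e) a) (RtoC 0)) with (Cmult (RtoC e) a) by ring.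
    replace (Cminus (RtoC 0) (Cmult (RtoC e) b)) with (Copp (Cmult (RtoC e) b)) by ring.
    rewrite Cmod_opp. unfold Cminus.
    pose proof (Cmod_triangle (Cmult (RtoC e) b) (Copp (Cmult (RtoC e) a))) as Htri.
    rewrite Cmod_opp in Htri. lra. }
  eapply Rle_trans; [|apply Rmult_le_compat_l; [|exact Hper]].
  - apply (tri_int_approx_bound g (RtoC 0) (RtoC 0)); try apply cont_on_seg_disc;
      auto using in_disc_0, in_disc_scal.
    intros w Hw. replace (Cminus (g w) (Cplus (RtoC 0) (Cmult (RtoC 0) w))) with (g w) by ring.
    apply HM. pose proof (on_sides_near_vertex _ _ _ w Hw) as Hw0.
    replace (Cminus w (RtoC 0)) with w in Hw0 by ring. lra.
  - specialize (HM (RtoC 0)). rewrite Cmod_0 in HM.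
    pose proof (Cmod_ge_0 (g (RtoC 0))).
    assert (0 <= r) by (pose proof (Cmod_ge_0 (Cmult (RtoC e) a)); lra).
    apply Rle_trans with (Cmod (g (RtoC 0))); [lra | apply HM; lra].
Qed.

Lemma holo_on_disc_halfplane g rho u d : cont_holo_off0 g -> rho < 1 -> 0 < d ->
  holo_on (disc_halfplane rho u d) g.
Proof.
  intros [_ Hg] Hrho Hd w [Hw1 Hw2]. apply Hg; [unfold in_disc; lra|].
  intros ->. simpl in Hw2. lra.
Qed.

(* The two outer pieces of [tri_int_0_shrink] lie in a half-plane avoiding [0], where
   Goursat's lemma applies. *)
Lemma tri_int_0_rescale g a b e : cont_holo_off0 g -> in_disc a -> in_disc b ->
  fst a * snd b - snd a * fst b <> 0 -> 0 < e <= 1 ->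
  tri_int g (RtoC 0) a b = tri_int g (RtoC 0) (Cmult (RtoC e) a) (Cmult (RtoC e) b).
Proof.
  intros Hg Ha Hb Hdet He.
  set (c := fst a * snd b - snd a * fst b) in *.
  set (s := if Rlt_dec 0 c then 1 else -1).
  assert (Hsc : 0 < s * c) by (unfold s; destruct (Rlt_dec 0 c); lra).
  (* [u] is normal to [b - a], oriented so that [a] and [b] lie on the positive side *)
  set (u := (s * (snd b - snd a), - (s * (fst b - fst a))) : C).
  assert (Hu : forall w, fst (Cmult (Cconj u) (Cmult (RtoC e) w)) = e * fst (Cmult (Cconj u) w))
    by (intros [w1 w2]; unfold u; simpl; ring).
  assert (Hua : fst (Cmult (Cconj u) a) = s * c) by (unfold u, c; destruct a, b; simpl; ring).
  assert (Hub : fst (Cmult (Cconj u) b) = s * c) by (unfold u, c; destruct a, b; simpl; ring).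
  set (rho := Rmax (Cmod a) (Cmod b)).
  assert (Hrho : rho < 1) by (apply Rmax_lub_lt; auto).
  set (R := disc_halfplane rho u (e * (s * c))).
  assert (HR : forall w, Cmod w <= rho -> s * c <= fst (Cmult (Cconj u) w) ->
                 R w /\ R (Cmult (RtoC e) w)).
  { intros w Hw1 Hw2. pose proof (Cmod_ge_0 w). unfold R. split; split; [lra | nra | |].
    - rewrite Cmod_RtoC_mult, Rabs_right by lra. nra.
    - rewrite Hu. nra. }
  destruct (HR a (Rmax_l _ _) ltac:(lra)) as [Ra Rea].
  destruct (HR b (Rmax_r _ _) ltac:(lra)) as [Rb Reb].
  pose proof (holo_on_disc_halfplane g rho u (e * (s * c)) Hg Hrho ltac:(nra)) as HgR.
  assert (G : forall p q r, R p -> R q -> R r -> tri_int g p q r = RtoC 0).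
  { intros p q r.
    apply goursat; [apply convex_disc_halfplane | apply closed_C_disc_halfplane | exact HgR]. }
  rewrite (tri_int_0_shrink g a b e) by (auto; lra).
  rewrite (G (Cmult (RtoC e) a) a b), (G (Cmult (RtoC e) a) b) by auto.
  ring.
Qed.

Lemma tri_int_0_independent g a b : cont_holo_off0 g -> in_disc a -> in_disc b ->
  fst a * snd b - snd a * fst b <> 0 -> tri_int g (RtoC 0) a b = RtoC 0.
Proof.
  intros Hg Ha Hb Hdet.
  set (rho := Rmax (Cmod a) (Cmod b)).
  assert (Hrho : 0 <= rho) by (eapply Rle_trans; [apply Cmod_ge_0 | apply Rmax_l]).
  destruct (Ccont_at_bounded g (RtoC 0) (proj1 Hg _ in_disc_0)) as (d0 & M & Hd0 & HM).
  assert (HM' : forall w, Cmod w < d0 -> Cmod (g w) <= M)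
    by (intros w Hw; apply HM; replace (Cminus w (RtoC 0)) with w by ring; exact Hw).
  assert (HM0 : 0 <= M).
  { pose proof (HM' (RtoC 0)). rewrite Cmod_0 in *. pose proof (Cmod_ge_0 (g (RtoC 0))). lra. }
  apply Cmod_eq_0, Rle_antisym; [|apply Cmod_ge_0].
  apply Rle_plus_epsilon. intros eps Heps. rewrite Rplus_0_l.
  set (e := Rmin 1 (Rmin (d0 / (8 * (rho + 1))) (eps / (4 * (M + 1) * (rho + 1))))).
  assert (He : 0 < e <= 1 /\ e <= d0 / (8 * (rho + 1)) /\ e <= eps / (4 * (M + 1) * (rho + 1))).
  { unfold e. split; [split; [repeat apply Rmin_pos; try lra; apply Rdiv_lt_0_compat; nra|]|].
    - apply Rmin_l.
    - split; eapply Rle_trans; [apply Rmin_r | apply Rmin_l | apply Rmin_r | apply Rmin_r]. }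
  rewrite (tri_int_0_rescale g a b e) by (auto; lra).
  assert (He1 : e * (rho + 1) <= d0 / 8).
  { apply Rle_trans with (d0 / (8 * (rho + 1)) * (rho + 1)); [apply Rmult_le_compat_r; lra|].
    right. field. lra. }
  assert (He2 : e * (4 * (M + 1) * (rho + 1)) <= eps).
  { apply Rle_trans with (eps / (4 * (M + 1) * (rho + 1)) * (4 * (M + 1) * (rho + 1)));
      [apply Rmult_le_compat_r; nra | right; field; nra]. }
  eapply Rle_trans; [apply (tri_int_0_small g a b e M d0); auto; [lra | fold rho; nra]|].
  fold rho. nra.
Qed.

Lemma tri_int_0_collinear g a k : cont_holo_off0 g -> in_disc a -> in_disc (Cmult (RtoC k) a) ->
  tri_int g (RtoC 0) a (Cmult (RtoC k) a) = RtoC 0.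
Proof.
  intros Hg Ha Hka.
  set (F := seg_integrand g (RtoC 0) a). set (m := Rmax 1 (Rabs k)).
  assert (HF : forall x y, Rabs x <= m -> Rabs y <= m -> ex_RInt (V := CV) F x y).
  { intros x y Hx Hy. apply (ex_RInt_continuous (V := CV)). intros s Hs.
    apply seg_integrand_cont, Hg.
    replace (seg_pt (RtoC 0) a s) with (Cmult (RtoC s) a) by (unfold seg_pt; ring).
    unfold in_disc in *. rewrite Cmod_RtoC_mult in *.
    assert (Hsm : Rabs s <= m).
    { apply Rabs_le. apply Rabs_le_between in Hx. apply Rabs_le_between in Hy.
      destruct (Rle_dec x y).
      - rewrite Rmin_left, Rmax_right in Hs by lra. lra.
      - rewrite Rmin_right, Rmax_left in Hs by lra. lra. }
    pose proof (Cmod_ge_0 a). apply Rle_lt_trans with (m * Cmod a); [apply Rmult_le_compat_r; lra|].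
    unfold m, Rmax. destruct (Rle_dec 1 (Rabs k)); lra. }
  assert (H1 : Rabs 1 <= m) by (rewrite Rabs_R1; apply Rmax_l).
  assert (H0 : Rabs 0 <= m) by (rewrite Rabs_R0; eapply Rle_trans; [|apply Rmax_l]; lra).
  assert (Hk : Rabs k <= m) by apply Rmax_r.
  assert (S2 : seg_int g a (Cmult (RtoC k) a) = RInt (V := CV) F 1 k).
  { replace k with (k - 1 + 1) at 2 by ring.
    apply (seg_int_reparam g a (Cmult (RtoC k) a) (k - 1) 1 F).
    - intros t. unfold F, seg_integrand, seg_pt. rewrite RtoC_plus, RtoC_mult, RtoC_minus.
      reparam_ring g.
    - replace (k - 1 + 1) with k by ring. auto. }
  assert (S3 : seg_int g (Cmult (RtoC k) a) (RtoC 0) = RInt (V := CV) F k 0).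
  { replace 0 with (- k + k) at 2 by ring.
    apply (seg_int_reparam g (Cmult (RtoC k) a) (RtoC 0) (- k) k F).
    - intros t. unfold F, seg_integrand, seg_pt. rewrite RtoC_plus, RtoC_mult, RtoC_opp.
      reparam_ring g.
    - replace (- k + k) with 0 by ring. auto. }
  unfold tri_int. rewrite S2, S3. change (seg_int g (RtoC 0) a) with (RInt (V := CV) F 0 1).
  rewrite <- (opp_RInt_swap (V := CV) F 0 k), <- (RInt_Chasles (V := CV) F 0 1 k) by auto.
  change (Cplus (Cplus (RInt (V := CV) F 0 1) (RInt (V := CV) F 1 k))
                (Copp (Cplus (RInt (V := CV) F 0 1) (RInt (V := CV) F 1 k))) = RtoC 0).
  ring.
Qed.

Lemma tri_int_0 g a b : cont_holo_off0 g -> in_disc a -> in_disc b -> tri_int g (RtoC 0) a b = RtoC 0.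
Proof.
  intros Hg Ha Hb.
  destruct (Req_dec (fst a * snd b - snd a * fst b) 0) as [Hdet|Hdet];
    [|apply tri_int_0_independent; auto].
  destruct (Ceq_dec a (RtoC 0)) as [->|Ha0].
  - unfold tri_int. rewrite seg_int_same, (seg_int_rev g (RtoC 0) b)
      by (apply cont_on_seg_disc; auto using in_disc_0).
    ring.
  - destruct a as [a1 a2], b as [b1 b2]. simpl in Hdet.
    assert (Hn : a1 * a1 + a2 * a2 <> 0).
    { intros E. apply Ha0. assert (a1 = 0) by nra. assert (a2 = 0) by nra. subst. reflexivity. }
    (* a zero determinant makes [b] the multiple [k a] with [k = <a, b> / |a|^2] *)
    set (k := (a1 * b1 + a2 * b2) / (a1 * a1 + a2 * a2)).
    assert (Eb : (b1, b2) = Cmult (RtoC k) (a1, a2)).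
    { assert (E1 : k * a1 = b1).
      { unfold k. field_simplify_eq; [|exact Hn].
        assert (a2 * (a1 * b2 - a2 * b1) = 0) by (rewrite Hdet; ring). lra. }
      assert (E2 : k * a2 = b2).
      { unfold k. field_simplify_eq; [|exact Hn].
        assert (a1 * (a1 * b2 - a2 * b1) = 0) by (rewrite Hdet; ring). lra. }
      apply injective_projections; simpl; lra. }
    rewrite Eb in *. apply tri_int_0_collinear; auto.
Qed.

(* By [tri_int_0], the increment from [z0] to [z] is the integral of [g] over [[z0, z]]. *)
Lemma is_derive_C_ray_primitive g z0 : cont_holo_off0 g -> in_disc z0 ->
  is_derive_C (fun z => seg_int g (RtoC 0) z) z0 (g z0).
Proof.
  intros Hg Hz0. apply is_derive_C_eps. intros eps Heps.
  destruct (proj1 Hg z0 Hz0 eps Heps) as [d [Hd Hcont]].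
  exists (Rmin d (1 - Cmod z0)). split; [apply Rmin_pos; unfold in_disc in Hz0; lra|].
  intros z Hz. pose proof (Rmin_l d (1 - Cmod z0)). pose proof (Rmin_r d (1 - Cmod z0)).
  assert (Dz : in_disc z) by (unfold in_disc; pose proof (Cmod_minus_le z z0); lra).
  pose proof (tri_int_0 g z0 z Hg Hz0 Dz) as T. unfold tri_int in T.
  rewrite (seg_int_rev g (RtoC 0) z) in T by (apply cont_on_seg_disc; auto using in_disc_0).
  assert (E : Cminus (Cminus (seg_int g (RtoC 0) z) (seg_int g (RtoC 0) z0))
                     (Cmult (g z0) (Cminus z z0))
              = seg_int (fun w => Cminus (g w) (g z0)) z0 z).
  { rewrite seg_int_minus, seg_int_const
      by solve [apply cont_on_seg_disc; auto | intros t _; apply Ccont_at_const].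
    transitivity (Cminus (Cminus (seg_int g z0 z) (Cmult (g z0) (Cminus z z0)))
                         (Cplus (Cplus (seg_int g (RtoC 0) z0) (seg_int g z0 z))
                                (Copp (seg_int g (RtoC 0) z))));
      [ring | rewrite T; ring]. }
  rewrite E. apply seg_int_bound.
  - intros t Ht. apply Ccont_at_minus; [apply (cont_on_seg_disc g z0 z); auto | apply Ccont_at_const].
  - intros t Ht. left. apply Hcont.
    rewrite seg_pt_minus_start. rewrite Cmod_RtoC_mult, Rabs_right by lra.
    pose proof (Cmod_ge_0 (Cminus z z0)). nra.
Qed.

(** * Elementary real estimates *)

Lemma neg_ln_nonneg x : 0 < x <= 1 -> 0 <= - ln x.
Proof. intros Hx. assert (Hln : ln x <= ln 1) by (apply ln_le; lra). rewrite ln_1 in Hln. lra. Qed.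

Lemma neg_ln_1_minus_le r : 0 < r <= / 2 -> - ln (1 - r) <= 2 * r.
Proof.
  intros Hr.
  assert (Hln : 1 - / (1 - r) <= ln (1 - r)).
  { pose proof (exp_ineq1_le (ln (/ (1 - r)))) as E.
    rewrite exp_ln in E by (apply Rinv_0_lt_compat; lra). rewrite ln_Rinv in E by lra. lra. }
  assert (/ (1 - r) - 1 <= 2 * r).
  { replace (/ (1 - r) - 1) with (r / (1 - r)) by (field; lra).
    apply (Rmult_le_reg_r (1 - r)); [lra|]. unfold Rdiv.
    rewrite Rmult_assoc, Rinv_l, Rmult_1_r by lra. nra. }
  lra.
Qed.

Lemma Rpower_1_l d : Rpower 1 d = 1.
Proof. unfold Rpower. rewrite ln_1, Rmult_0_r. apply exp_0. Qed.

Lemma Rpower_le_1 x d : 0 < x <= 1 -> 0 <= d -> Rpower x d <= 1.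
Proof. intros Hx Hd. rewrite <- (Rpower_1_l d). apply Rle_Rpower_l; lra. Qed.

(* [y e^-y <= 1] with [y = -d ln x]. *)
Lemma Rpower_neg_ln_le x d : 0 < x <= 1 -> 0 < d -> d * (Rpower x d * - ln x) <= 1.
Proof.
  intros Hx Hd. pose proof (neg_ln_nonneg x Hx) as HL. set (L := - ln x) in *.
  unfold Rpower. replace (d * ln x) with (- (d * L)) by (unfold L; ring).
  rewrite exp_Ropp. pose proof (exp_ineq1_le (d * L)). pose proof (exp_pos (d * L)).
  replace (d * (/ exp (d * L) * L)) with ((d * L) / exp (d * L)) by (field; lra).
  apply (Rmult_le_reg_r (exp (d * L))); auto. unfold Rdiv.
  rewrite Rmult_assoc, Rinv_l, Rmult_1_r by lra. lra.
Qed.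

Definition cesaro_const (beta : R) : R := 4 * (1 + Rpower 2 (- beta)) * (1 + / (1 - beta)).

Lemma cesaro_const_ge4 beta : beta < 1 -> 4 <= cesaro_const beta.
Proof.
  intros Hb. unfold cesaro_const. pose proof (exp_pos (- beta * ln 2)).
  assert (0 < / (1 - beta)) by (apply Rinv_0_lt_compat; lra).
  unfold Rpower in *. nra.
Qed.

Lemma log_weight_bound_nonneg beta r s : 0 <= beta < 1 -> 0 < r < 1 -> 1 - r <= s ->
  (1 - r * r) * - ln (1 - r) <= cesaro_const beta * (r * Rpower s beta).
Proof.
  intros Hb Hr Hs. set (x := 1 - r) in *. set (L := - ln x).
  assert (Hx : 0 < x <= 1) by (unfold x; lra).
  pose proof (neg_ln_nonneg x Hx) as HL. fold L in HL.
  pose proof (cesaro_const_ge4 beta ltac:(lra)) as HK.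
  (* split [x = x^(1-beta) x^beta] and use [x^beta <= s^beta] *)
  set (A := Rpower x (1 - beta)). set (B := Rpower x beta).
  assert (Hsplit : x = A * B)
    by (unfold A, B; rewrite <- Rpower_plus; replace (1 - beta + beta) with 1 by ring;
        rewrite Rpower_1; lra).
  assert (HA : 0 < A) by apply exp_pos. assert (HB : 0 < B) by apply exp_pos.
  assert (HBs : B <= Rpower s beta) by (unfold B; apply Rle_Rpower_l; lra).
  assert (HA1 : A <= 1) by (unfold A; apply Rpower_le_1; lra).
  assert (HAL : (1 - beta) * (A * L) <= 1) by (unfold A, L; apply Rpower_neg_ln_le; lra).
  assert (Main : (1 + r) * A * L <= cesaro_const beta * r).
  { destruct (Rle_dec r (/ 2)) as [Hr2|Hr2].
    - pose proof (neg_ln_1_minus_le r ltac:(lra)) as HLr. fold x L in HLr.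
      assert (A * L <= 2 * r) by nra. nra.
    - assert (A * L <= / (1 - beta)).
      { apply (Rmult_le_reg_l (1 - beta)); [lra|]. rewrite Rinv_r by lra. lra. }
      assert (cesaro_const beta / 2 >= 2 * / (1 - beta)).
      { unfold cesaro_const, Rpower. pose proof (exp_pos (- beta * ln 2)).
        assert (0 < / (1 - beta)) by (apply Rinv_0_lt_compat; lra). nra. }
      nra. }
  replace (1 - r * r) with ((1 + r) * x) by (unfold x; ring). rewrite Hsplit.
  apply Rle_trans with ((1 + r) * A * L * Rpower s beta).
  - replace ((1 + r) * (A * B) * L) with ((1 + r) * A * L * B) by ring.
    apply Rmult_le_compat_l; [apply Rmult_le_pos; nra | exact HBs].
  - pose proof (exp_pos (beta * ln s)). unfold Rpower in *. nra.
Qed.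

Lemma log_weight_bound_neg beta r s : beta < 0 -> 0 < r < 1 -> 0 < s <= 1 + r ->
  (1 - r * r) * - ln (1 - r) <= cesaro_const beta * (r * Rpower s beta).
Proof.
  intros Hb Hr Hs. set (x := 1 - r) in *. set (L := - ln x).
  assert (Hx : 0 < x <= 1) by (unfold x; lra).
  pose proof (neg_ln_nonneg x Hx) as HL. fold L in HL.
  assert (HxL : x * L <= 2 * r).
  { destruct (Rle_dec r (/ 2)) as [Hr2|Hr2].
    - pose proof (neg_ln_1_minus_le r ltac:(lra)) as HLr. fold x L in HLr. nra.
    - pose proof (Rpower_neg_ln_le x 1 Hx ltac:(lra)) as HxL1.
      rewrite Rpower_1 in HxL1 by lra. fold L in HxL1. lra. }
  (* for [beta < 0], [s <= 2] gives [s^beta >= 2^beta = 1 / 2^(-beta)] *)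
  assert (H2 : 1 <= Rpower 2 (- beta) * Rpower s beta).
  { assert (Hs2 : Rpower s (- beta) <= Rpower 2 (- beta)) by (apply Rle_Rpower_l; lra).
    assert (Hpos : 0 < Rpower s (- beta)) by apply exp_pos.
    replace (Rpower s beta) with (/ Rpower s (- beta))
      by (rewrite <- Rpower_Ropp, Ropp_involutive; reflexivity).
    apply (Rmult_le_reg_r (Rpower s (- beta))); [exact Hpos|].
    rewrite Rmult_assoc, Rinv_l, Rmult_1_l, Rmult_1_r by lra. exact Hs2. }
  pose proof (exp_pos (- beta * ln 2)). pose proof (exp_pos (beta * ln s)).
  assert (0 < / (1 - beta)) by (apply Rinv_0_lt_compat; lra).
  replace (1 - r * r) with ((1 + r) * x) by (unfold x; ring).
  apply Rle_trans with (4 * r * (Rpower 2 (- beta) * Rpower s beta)).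
  - assert (0 <= x * L) by (apply Rmult_le_pos; lra).
    apply Rle_trans with (4 * r); [nra|]. nra.
  - assert (Rpower 2 (- beta) <= (1 + Rpower 2 (- beta)) * (1 + / (1 - beta)))
      by (unfold Rpower; nra).
    assert (0 <= 4 * r * Rpower s beta) by (unfold Rpower; nra).
    unfold cesaro_const.
    replace (4 * r * (Rpower 2 (- beta) * Rpower s beta))
      with (4 * r * Rpower s beta * Rpower 2 (- beta)) by ring.
    replace (4 * (1 + Rpower 2 (- beta)) * (1 + / (1 - beta)) * (r * Rpower s beta))
      with (4 * r * Rpower s beta * ((1 + Rpower 2 (- beta)) * (1 + / (1 - beta)))) by ring.
    apply Rmult_le_compat_l; assumption.
Qed.

Lemma log_weight_bound beta r s : beta < 1 -> 0 < r < 1 -> 1 - r <= s <= 1 + r ->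
  (1 - r * r) * - ln (1 - r) <= cesaro_const beta * (r * Rpower s beta).
Proof.
  intros Hb Hr Hs. destruct (Rle_dec 0 beta).
  - apply log_weight_bound_nonneg; lra.
  - apply log_weight_bound_neg; lra.
Qed.

(** * The Cesàro operator on [B_1^0] *)

Lemma bloch_norm_is_lub f : in_B1 f -> is_lub (bloch_vals f) (bloch_norm f).
Proof.
  intros [Ha [M HM]].
  destruct (Ha _ in_disc_0) as [l0 Hl0].
  assert (Hv0 : bloch_vals f ((1 - Cmod (RtoC 0) ^ 2) * Cmod l0)) 
    by (exists (RtoC 0), l0; split; [apply in_disc_0 | split; [exact Hl0 | reflexivity]]).
  pose proof (Lub_Rbar_correct (bloch_vals f)) as [Hub Hlub].
  unfold bloch_norm. destruct (Lub_Rbar (bloch_vals f)) as [s| |]; simpl.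
  - split; [intros r Hr; apply (Hub r Hr) | intros b Hb; apply (Hlub (Finite b)), Hb].
  - exfalso. apply (Hlub (Finite M)). intros r Hr. apply HM, Hr.
  - exfalso. exact (Hub _ Hv0).
Qed.

Lemma bloch_norm_ge0 f : in_B1 f -> 0 <= bloch_norm f.
Proof.
  intros Hf. pose proof (bloch_norm_is_lub f Hf) as [Hub _].
  destruct (proj1 Hf _ in_disc_0) as [l0 Hl0].
  eapply Rle_trans;
    [|apply Hub; exists (RtoC 0), l0; split; [apply in_disc_0 | split; [exact Hl0 | reflexivity]]].
  rewrite Cmod_0. pose proof (Cmod_ge_0 l0). nra.
Qed.

Lemma bloch_deriv_bound f w : in_B1 f -> in_disc w ->
  (1 - Cmod w ^ 2) * Cmod (C_derive f w) <= bloch_norm f.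
Proof.
  intros Hf Hw. apply (bloch_norm_is_lub f Hf).
  exists w, (C_derive f w). split; [exact Hw | split; [|reflexivity]].
  apply is_derive_C_Defs, is_derive_C_analytic; [apply Hf | exact Hw].
Qed.

Lemma derivable_pt_lim_Re_ray f v z t0 l : is_derive_C f (Cmult (RtoC t0) z) l ->
  derivable_pt_lim (fun t => fst (Cmult v (f (Cmult (RtoC t) z)))) t0 (fst (Cmult v (Cmult l z))).
Proof.
  intros Hf eps Heps. apply is_derive_C_eps in Hf.
  set (K := Cmod v * Cmod z + 1).
  pose proof (Cmod_ge_0 v). pose proof (Cmod_ge_0 z).
  assert (HK : 0 < K) by (unfold K; nra).
  destruct (Hf (eps / (2 * K))) as [d [Hd Hd']]; [apply Rdiv_lt_0_compat; lra|].
  assert (Hd2 : 0 < d / (Cmod z + 1)) by (apply Rdiv_lt_0_compat; lra).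
  exists (mkposreal _ Hd2). intros h Hh0 Hh. simpl in Hh.
  set (w := Cmult (RtoC t0) z). set (w' := Cmult (RtoC (t0 + h)) z).
  assert (Ew : Cminus w' w = Cmult (RtoC h) z) by (unfold w, w'; rewrite RtoC_plus; ring).
  assert (Hh' : 0 < Rabs h) by (apply Rabs_pos_lt; auto).
  assert (Hw : Cmod (Cminus w' w) < d).
  { rewrite Ew, Cmod_RtoC_mult.
    apply Rle_lt_trans with (Rabs h * (Cmod z + 1)); [apply Rmult_le_compat_l; lra|].
    apply Rlt_le_trans with (d / (Cmod z + 1) * (Cmod z + 1)); [apply Rmult_lt_compat_r; lra|].
    right. field. lra. }
  specialize (Hd' w' Hw). fold w in Hd'.
  replace ((fst (Cmult v (f w')) - fst (Cmult v (f w))) / h - fst (Cmult v (Cmult l z)))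
    with (fst (Cmult v (Cminus (Cminus (f w') (f w)) (Cmult l (Cminus w' w)))) / h).
  2: { rewrite Ew.
       destruct v as [v1 v2], (f w') as [p1 p2], (f w) as [q1 q2], l as [l1 l2], z as [z1 z2].
       simpl. field. auto. }
  rewrite Ew in Hd' |- *. rewrite Cmod_RtoC_mult in Hd'.
  unfold Rdiv. rewrite Rabs_mult, Rabs_inv.
  eapply Rle_lt_trans.
  { apply Rmult_le_compat_r; [left; apply Rinv_0_lt_compat, Hh'|].
    eapply Rle_trans; [apply re_le_Cmod|]. rewrite Cmod_mult.
    apply Rmult_le_compat_l; [apply Cmod_ge_0 | exact Hd']. }
  replace (Cmod v * (eps / (2 * K) * (Rabs h * Cmod z)) * / Rabs h)
    with (Cmod v * Cmod z * (eps / (2 * K))) by (field; lra).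
  apply Rle_lt_trans with (K * (eps / (2 * K))).
  - apply Rmult_le_compat_r; [left; apply Rdiv_lt_0_compat; lra | unfold K; lra].
  - replace (K * (eps / (2 * K))) with (eps / 2) by (field; lra). lra.
Qed.

Lemma in_disc_ray z t : in_disc z -> 0 <= t <= 1 -> in_disc (Cmult (RtoC t) z).
Proof.
  unfold in_disc. intros Hz Ht. rewrite Cmod_RtoC_mult, Rabs_right by lra.
  pose proof (Cmod_ge_0 z). nra.
Qed.

Lemma Re_deriv_ray_le f v z c : in_B1 f -> in_disc z -> 0 <= c <= 1 ->
  fst (Cmult v (Cmult (C_derive f (Cmult (RtoC c) z)) z))
  <= Cmod v * bloch_norm f * (Cmod z / (1 - c * Cmod z)).
Proof.
  intros Hf Hz Hc. set (r := Cmod z).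
  assert (Hr : 0 <= r < 1) by (split; [apply Cmod_ge_0 | exact Hz]).
  pose proof (bloch_deriv_bound f _ Hf (in_disc_ray z c Hz Hc)) as Hdb.
  rewrite Cmod_RtoC_mult, Rabs_right in Hdb by lra. fold r in Hdb.
  set (dd := Cmod (C_derive f (Cmult (RtoC c) z))) in *.
  pose proof (Cmod_ge_0 (C_derive f (Cmult (RtoC c) z))) as Hdd. fold dd in Hdd.
  assert (Hcr : 0 <= c * r <= c * r) by (split; [apply Rmult_le_pos|]; lra).
  assert (Hcr1 : c * r < 1) by nra.
  (* [1 - (c r)^2 >= 1 - c r] *)
  assert (Hdd' : dd * (1 - c * r) <= bloch_norm f).
  { assert (0 <= dd * (c * r - (c * r) ^ 2)) by (apply Rmult_le_pos; nra). nra. }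
  eapply Rle_trans; [apply Rle_abs|]. eapply Rle_trans; [apply re_le_Cmod|].
  rewrite !Cmod_mult. fold r dd. pose proof (Cmod_ge_0 v).
  replace (Cmod v * bloch_norm f * (r / (1 - c * r))) with (Cmod v * r * (bloch_norm f / (1 - c * r)))
    by (field; lra).
  replace (Cmod v * (dd * r)) with (Cmod v * r * dd) by ring.
  apply Rmult_le_compat_l; [nra|].
  apply (Rmult_le_reg_r (1 - c * r)); [lra|]. unfold Rdiv.
  rewrite Rmult_assoc, Rinv_l, Rmult_1_r by lra. exact Hdd'.
Qed.

(* Mean value theorem for [psi t = Re (conj (f z) f (t z)) + |f z| ||f|| ln (1 - t |z|)],
   whose derivative is [<= 0] by the Bloch bound on [f']. *)
Lemma Cmod_le_bloch_log f z : in_B10 f -> in_disc z -> Cmod (f z) <= bloch_norm f * - ln (1 - Cmod z).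
Proof.
  intros [Hf Hf0] Hz. pose proof (bloch_norm_ge0 f Hf) as HN.
  set (N := bloch_norm f) in *. set (r := Cmod z).
  assert (Hr : 0 <= r < 1) by (split; [apply Cmod_ge_0 | exact Hz]).
  assert (HL : 0 <= - ln (1 - r)) by (apply neg_ln_nonneg; lra).
  destruct (Ceq_dec (f z) (RtoC 0)) as [E|E]; [rewrite E, Cmod_0; nra|].
  set (m := Cmod (f z)). assert (Hm : 0 < m) by (apply Cmod_gt_0; auto).
  set (v := Cconj (f z)).
  set (psi := fun t => fst (Cmult v (f (Cmult (RtoC t) z))) + m * N * ln (1 - t * r)).
  set (psi' := fun t => fst (Cmult v (Cmult (C_derive f (Cmult (RtoC t) z)) z))
                        + m * N * (- r / (1 - t * r))).
  destruct (MVT_cor2 psi psi' 0 1 Rlt_0_1) as [c [Hc Hcr]].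
  { intros c Hc. unfold psi, psi'. apply derivable_pt_lim_plus.
    - apply derivable_pt_lim_Re_ray, is_derive_C_analytic; [apply Hf | apply in_disc_ray; auto].
    - apply derivable_pt_lim_scal. apply is_derive_Reals. auto_derive; [nra | field; nra]. }
  assert (Hpsi1 : psi 1 = m * m + m * N * ln (1 - r)).
  { unfold psi. replace (Cmult (RtoC 1) z) with z by ring. replace (1 * r) with r by ring.
    unfold v, m. destruct (f z) as [a b]. unfold Cmod. simpl.
    rewrite !Rmult_1_r, sqrt_sqrt by nra. ring. }
  assert (Hpsi0 : psi 0 = 0).
  { unfold psi. replace (Cmult (RtoC 0) z) with (RtoC 0) by ring.
    rewrite Hf0, Rmult_0_l, Rminus_0_r, ln_1. simpl. ring. }
  assert (Hder : psi' c <= 0).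
  { unfold psi'. pose proof (Re_deriv_ray_le f v z c Hf Hz ltac:(lra)) as Hb.
    unfold v in Hb. rewrite Cmod_conj in Hb. fold m N r v in Hb.
    assert (0 < 1 - c * r) by nra.
    replace (m * N * (- r / (1 - c * r))) with (- (m * N * (r / (1 - c * r)))) by (field; lra).
    lra. }
  rewrite Hpsi1, Hpsi0, Rminus_0_r in Hc. replace (psi' c * (1 - 0)) with (psi' c) in Hc by ring.
  assert (m * (m + N * ln (1 - r)) <= 0) by nra.
  assert (m + N * ln (1 - r) <= 0) by nra.
  lra.
Qed.

Lemma Cmod_1_minus_bounds z : 1 - Cmod z <= Cmod (Cminus (RtoC 1) z) <= 1 + Cmod z.
Proof.
  pose proof (Cmod_minus_le (RtoC 1) (Cminus (RtoC 1) z)) as H1.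
  pose proof (Cmod_minus_le (Cminus (RtoC 1) z) (RtoC 1)) as H2.
  replace (Cminus (RtoC 1) (Cminus (RtoC 1) z)) with z in H1 by ring.
  replace (Cminus (Cminus (RtoC 1) z) (RtoC 1)) with (Copp z) in H2 by ring.
  rewrite Cmod_opp, Cmod_1 in *. lra.
Qed.

Lemma cesaro_kernel_bound beta f z : beta < 1 -> in_B10 f -> in_disc z ->
  (1 - Cmod z ^ 2) * Cmod (cesaro_kernel beta f z) <= cesaro_const beta * bloch_norm f.
Proof.
  intros Hb Hf Hz. pose proof (bloch_norm_ge0 f (proj1 Hf)) as HN.
  pose proof (cesaro_const_ge4 beta Hb) as HK.
  unfold cesaro_kernel. destruct (Ceq_dec z (RtoC 0)) as [->|Hz0].
  - pose proof (bloch_deriv_bound f (RtoC 0) (proj1 Hf) Hz). nra.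
  - set (r := Cmod z). assert (Hr : 0 < r < 1) by (split; [apply Cmod_gt_0; auto | exact Hz]).
    set (s := Cmod (Cminus (RtoC 1) z)).
    pose proof (Cmod_1_minus_bounds z) as Hs. fold r s in Hs.
    pose proof (log_weight_bound beta r s Hb Hr Hs) as Hw.
    pose proof (Cmod_le_bloch_log f z Hf Hz) as Hfz. fold r in Hfz.
    assert (Hps : 0 < r * Rpower s beta) by (pose proof (exp_pos (beta * ln s)); unfold Rpower; nra).
    unfold Cdiv.
    rewrite Cmod_mult, Cmod_inv, Cmod_mult, Cmod_Cpow
      by (apply Cmult_neq_0; auto; apply Cpow_neq0).
    fold r s.
    replace (1 - r ^ 2) with (1 - r * r) by ring.
    apply (Rmult_le_reg_r (r * Rpower s beta)); [exact Hps|].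
    rewrite (Rmult_assoc (1 - r * r)), Rmult_assoc, Rinv_l, Rmult_1_r by lra.
    apply Rle_trans with (bloch_norm f * ((1 - r * r) * - ln (1 - r))).
    + replace (bloch_norm f * ((1 - r * r) * - ln (1 - r)))
        with ((1 - r * r) * (bloch_norm f * - ln (1 - r))) by ring.
      apply Rmult_le_compat_l; [nra | exact Hfz].
    + replace (cesaro_const beta * bloch_norm f * (r * Rpower s beta))
        with (bloch_norm f * (cesaro_const beta * (r * Rpower s beta))) by ring.
      apply Rmult_le_compat_l; assumption.
Qed.

Definition cesaro_integrand (beta : R) (f : C -> C) (z : C) (t : R) : C :=
  Cmult (Cdiv (f (Cmult (RtoC t) z))
              (Cmult (Cmult (RtoC t) z) (Cpow (Cminus (RtoC 1) (Cmult (RtoC t) z)) beta))) z.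

Lemma cesaro_integrand_kernel beta f z t : 0 < t ->
  cesaro_integrand beta f z t = seg_integrand (cesaro_kernel beta f) (RtoC 0) z t.
Proof.
  intros Ht. unfold cesaro_integrand, seg_integrand.
  replace (seg_pt (RtoC 0) z t) with (Cmult (RtoC t) z) by (unfold seg_pt; ring).
  replace (Cminus z (RtoC 0)) with z by ring.
  destruct (Ceq_dec z (RtoC 0)) as [->|Hz]; [rewrite !Cmult_0_r; reflexivity|].
  unfold cesaro_kernel. destruct (Ceq_dec (Cmult (RtoC t) z) (RtoC 0)) as [E|E]; [|reflexivity].
  exfalso. revert E. apply Cmult_neq_0; auto. intros Et. apply RtoC_inj in Et. lra.
Qed.

Lemma cesaro_ray_integral beta f z :
  cesaro beta f z = seg_int (cesaro_kernel beta f) (RtoC 0) z.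
Proof.
  apply (RInt_ext (V := CV)). rewrite Rmin_left, Rmax_right by lra. intros t Ht.
  apply cesaro_integrand_kernel. lra.
Qed.

Lemma is_RInt_cesaro_integrand beta f z : in_B10 f -> in_disc z ->
  is_RInt (V := CV) (cesaro_integrand beta f z) 0 1 (cesaro beta f z).
Proof.
  intros Hf Hz. rewrite cesaro_ray_integral.
  apply (is_RInt_ext (V := CV)) with (seg_integrand (cesaro_kernel beta f) (RtoC 0) z).
  - rewrite Rmin_left, Rmax_right by lra. intros t Ht. symmetry. apply cesaro_integrand_kernel. lra.
  - apply is_RInt_seg_int, cont_on_seg_disc; auto using in_disc_0, cont_holo_off0_cesaro_kernel.
Qed.

Lemma is_derive_C_cesaro beta f z : in_B10 f -> in_disc z ->
  is_derive_C (cesaro beta f) z (cesaro_kernel beta f z).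
Proof.
  intros Hf Hz. eapply is_derive_C_ext; [intros w; symmetry; apply cesaro_ray_integral|].
  apply is_derive_C_ray_primitive; auto. apply cont_holo_off0_cesaro_kernel, Hf.
Qed.

Lemma is_RInt_Cmult (F : R -> C) a b (l c : C) :
  is_RInt (V := CV) F a b l -> is_RInt (V := CV) (fun t => Cmult c (F t)) a b (Cmult c l).
Proof.
  intros H.
  pose proof (is_RInt_fct_extend_fst (U := R_NormedModule) (V := R_NormedModule) F a b l H) as H1.
  pose proof (is_RInt_fct_extend_snd (U := R_NormedModule) (V := R_NormedModule) F a b l H) as H2.
  destruct c as [c1 c2].
  apply (is_RInt_ext (V := CV))
    with (fun t => (c1 * fst (F t) - c2 * snd (F t), c1 * snd (F t) + c2 * fst (F t)) : CV).
  { intros t _. apply injective_projections; simpl; ring. }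
  replace (Cmult (c1, c2) l) with ((c1 * fst l - c2 * snd l, c1 * snd l + c2 * fst l) : C)
    by (apply injective_projections; simpl; ring).
  apply (is_RInt_fct_extend_pair (U := R_NormedModule) (V := R_NormedModule)); simpl.
  - apply (is_RInt_minus (V := R_NormedModule)); apply (is_RInt_scal (V := R_NormedModule)); auto.
  - apply (is_RInt_plus (V := R_NormedModule)); apply (is_RInt_scal (V := R_NormedModule)); auto.
Qed.

Lemma cesaro_bloch_vals_le beta f r : beta < 1 -> in_B10 f -> bloch_vals (cesaro beta f) r ->
  r <= cesaro_const beta * bloch_norm f.
Proof.
  intros Hb Hf (z & l & Hz & Hl & ->).
  replace l with (cesaro_kernel beta f z).
  - apply cesaro_kernel_bound; auto.
  - rewrite <- (is_C_derive_unique _ _ _ Hl). symmetry.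
    apply is_C_derive_unique, is_derive_C_Defs, is_derive_C_cesaro; auto.
Qed.

Lemma cesaro_in_B10 beta f : beta < 1 -> in_B10 f -> in_B10 (cesaro beta f).
Proof.
  intros Hb Hf. split; [split|].
  - intros z Hz. exists (cesaro_kernel beta f z). apply is_derive_C_Defs, is_derive_C_cesaro; auto.
  - exists (cesaro_const beta * bloch_norm f). intros r. apply cesaro_bloch_vals_le; auto.
  - rewrite cesaro_ray_integral. apply seg_int_same.
Qed.

Lemma cesaro_bloch_norm_le beta f : beta < 1 -> in_B10 f ->
  bloch_norm (cesaro beta f) <= cesaro_const beta * bloch_norm f.
Proof.
  intros Hb Hf. apply (bloch_norm_is_lub _ (proj1 (cesaro_in_B10 beta f Hb Hf))).
  intros r. apply cesaro_bloch_vals_le; auto.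
Qed.

Lemma cesaro_integrand_linear beta f g a b z t :
  cesaro_integrand beta (fun w => Cplus (Cmult a (f w)) (Cmult b (g w))) z t =
  Cplus (Cmult a (cesaro_integrand beta f z t)) (Cmult b (cesaro_integrand beta g z t)).
Proof. unfold cesaro_integrand, Cdiv. ring. Qed.

Lemma cesaro_linear beta f g a b z : in_B10 f -> in_B10 g -> in_disc z ->
  cesaro beta (fun w => Cplus (Cmult a (f w)) (Cmult b (g w))) z =
  Cplus (Cmult a (cesaro beta f z)) (Cmult b (cesaro beta g z)).
Proof.
  intros Hf Hg Hz. apply (is_RInt_unique (V := CV)).
  apply (is_RInt_ext (V := CV)) with (fun t =>
    plus (Cmult a (cesaro_integrand beta f z t) : CV) (Cmult b (cesaro_integrand beta g z t))).
  - intros t _. symmetry. apply cesaro_integrand_linear.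
  - apply (is_RInt_plus (V := CV)); apply is_RInt_Cmult, is_RInt_cesaro_integrand; auto.
Qed.

Theorem theorem2p4 (beta : R) (Hbeta : beta < 1) :
  (* C_beta maps B_1^0 into B_1^0 *)
  (forall f : C -> C, in_B10 f -> in_B10 (cesaro beta f)) /\
  (* C_beta is linear on B_1^0 (as functions on the disc) *)
  (forall (f g : C -> C) (a b : C), in_B10 f -> in_B10 g ->
     forall z : C, in_disc z ->
       cesaro beta (fun w => Cplus (Cmult a (f w)) (Cmult b (g w))) z =
       Cplus (Cmult a (cesaro beta f z)) (Cmult b (cesaro beta g z))) /\
  (* C_beta is bounded for the B_1 norm *)
  (exists K : R, 0 <= K /\
     forall f : C -> C, in_B10 f ->
       bloch_norm (cesaro beta f) <= K * bloch_norm f).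
Proof.
  split; [|split].
  - intros f Hf. apply cesaro_in_B10; auto.
  - intros f g a b Hf Hg z Hz. apply cesaro_linear; auto.
  - exists (cesaro_const beta). split.
    + pose proof (cesaro_const_ge4 beta Hbeta). lra.
    + intros f Hf. apply cesaro_bloch_norm_le; auto.
Qed.
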